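(* Let $(\mu_z^\varepsilon)$ be a time-analytic local random walk on $\mathcal G$. For every fixed pair of distinct vertices $x,y$, the function $\varepsilon\mapsto{}^{\mathcal O}\mathrm{Ric}_\varepsilon(x,y)$ is locally Lipschitz on $(0,1)$ and is piecewise analytic, with finitely many distinct analytic pieces on $[0,1]$. The same holds with ''time-analytic'' replaced by ''time-affine'' (resp. ''time-polynomial'') and ''piecewise analytic'' replaced by ''piecewise affine'' (resp. ''piecewise polynomial'').
   Context: $\mathcal G$ is a locally finite graph with vertex set $V$, and $\mathrm d$ is a distance on $V$ with $(V,\mathrm d)$ complete. A random walk is a family of probability measures $\mu_z^\varepsilon$ on $V$ ($z\in V$, $\varepsilon\in[0,1]$) with finite first moments, continuous in $\varepsilon$, $\mu_z^0=\delta_z$. It is local if for each $z$ there is a finite set $\mathcal K_z\subset V$ with $\mathrm{supp}(\mu_z^\varepsilon)\subset\mathcal K_z$ for all $\varepsilon$. It is time-analytic (resp. time-affine, time-polynomial) if for all $x,y$ the function $p_{xy}(\varepsilon):=\mu_x^\varepsilon(y)$ is analytic (resp. affine, polynomial) in $\varepsilon$ and admits an analytic continuation to $(-\delta_{xy},1+\delta_{xy})$ for some $\delta_{xy}>0$ (the continuation need not be a probability measure). $\mathcal W_1$ is the $L^1$-Wasserstein distance with respect to $\mathrm d$, and ${}^{\mathcal O}\mathrm{Ric}_\varepsilon(x,y):=1-\mathcal W_1(\mu_x^\varepsilon,\mu_y^\varepsilon)/\mathrm d(x,y)$. *)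

From Stdlib Require Import Reals List.
From Coquelicot Require Import Coquelicot.
Import ListNotations.
Open Scope R_scope.

Definition locally_finite_graph {V : Type} (E : V -> V -> Prop) : Prop :=
  (forall x y, E x y -> E y x) /\
  (forall x, exists L : list V, forall y, E x y -> In y L).

Definition is_distance {V : Type} (d : V -> V -> R) : Prop :=
  (forall x y, 0 <= d x y) /\
  (forall x y, d x y = 0 <-> x = y) /\
  (forall x y, d x y = d y x) /\
  (forall x y z, d x z <= d x y + d y z).

Definition complete_distance {V : Type} (d : V -> V -> R) : Prop :=
  forall u : nat -> V,
    (forall e, 0 < e -> exists N, forall m n, (N <= m)%nat -> (N <= n)%nat ->
        d (u m) (u n) < e) ->
    exists l, forall e, 0 < e -> exists N, forall n, (N <= n)%nat -> d (u n) l < e.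

Definition fsum {V : Type} (L : list V) (f : V -> R) : R :=
  fold_right (fun v acc => f v + acc) 0 L.

(** A random walk is given by its mass functions:
    mu z eps v = mu_z^eps({v}).  It is a local random walk if:
    each mu_z^eps (eps in [0,1]) is a probability measure supported in a fixed
    finite set K_z (so first moments are automatically finite),
    eps |-> mu_z^eps is continuous on [0,1], and mu_z^0 = delta_z. *)
Definition local_random_walk {V : Type} (mu : V -> R -> V -> R) : Prop :=
  (exists K : V -> list V, forall z, NoDup (K z) /\
     forall eps, 0 <= eps <= 1 ->
       (forall v, 0 <= mu z eps v) /\
       (forall v, ~ In v (K z) -> mu z eps v = 0) /\
       fsum (K z) (mu z eps) = 1) /\
  (forall z v e0, 0 <= e0 <= 1 -> forall r, 0 < r -> exists del, 0 < del /\
     forall e, 0 <= e <= 1 -> Rabs (e - e0) < del ->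
       Rabs (mu z e v - mu z e0 v) < r) /\
  (forall z v, (v = z -> mu z 0 v = 1) /\ (v <> z -> mu z 0 v = 0)).

(** Every coupling of finitely supported measures is of
    this form. *)
Definition is_coupling {V : Type} (m n : V -> R) (pi : V -> V -> R) (L : list V)
  : Prop :=
  NoDup L /\
  (forall u v, 0 <= pi u v) /\
  (forall u v, ~ (In u L /\ In v L) -> pi u v = 0) /\
  (forall u, fsum L (fun v => pi u v) = m u) /\
  (forall v, fsum L (fun u => pi u v) = n v).

Definition W1 {V : Type} (d : V -> V -> R) (m n : V -> R) : R :=
  real (Glb_Rbar (fun c => exists (pi : V -> V -> R) (L : list V),
          is_coupling m n pi L /\
          c = fsum L (fun u => fsum L (fun v => pi u v * d u v)))).

Definition ORic {V : Type} (d : V -> V -> R) (mu : V -> R -> V -> R)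
  (x y : V) (eps : R) : R :=
  1 - W1 d (mu x eps) (mu y eps) / d x y.

Definition analytic_on (a b : R) (f : R -> R) : Prop :=
  forall x0, a < x0 < b -> exists r, 0 < r /\ exists c : nat -> R,
    forall x, Rabs (x - x0) < r -> is_pseries c (x - x0) (f x).

Definition is_affine (f : R -> R) : Prop :=
  exists a b, forall x, f x = a + b * x.

(* polynomial with coefficient list p = [p0; p1; ...], Horner evaluation *)
Definition poly_eval (p : list R) (x : R) : R :=
  fold_right (fun a acc => a + x * acc) 0 p.

Definition is_polynomial (f : R -> R) : Prop :=
  exists p : list R, forall x, f x = poly_eval p x.

Definition time_analytic {V : Type} (mu : V -> R -> V -> R) : Prop :=
  forall x y, exists del, 0 < del /\ exists g : R -> R,
    analytic_on (- del) (1 + del) g /\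
    forall eps, 0 <= eps <= 1 -> mu x eps y = g eps.

Definition time_affine {V : Type} (mu : V -> R -> V -> R) : Prop :=
  forall x y, exists g : R -> R, is_affine g /\
    forall eps, 0 <= eps <= 1 -> mu x eps y = g eps.

Definition time_polynomial {V : Type} (mu : V -> R -> V -> R) : Prop :=
  forall x y, exists g : R -> R, is_polynomial g /\
    forall eps, 0 <= eps <= 1 -> mu x eps y = g eps.

Definition locally_lipschitz_01 (f : R -> R) : Prop :=
  forall t, 0 < t < 1 -> exists r, 0 < r /\ exists K, 0 <= K /\
    forall s1 s2, 0 < s1 < 1 -> 0 < s2 < 1 ->
      Rabs (s1 - t) < r -> Rabs (s2 - t) < r ->
      Rabs (f s1 - f s2) <= K * Rabs (s1 - s2).

Definition piecewise (piece : R -> R -> (R -> R) -> Prop) (f : R -> R) : Prop :=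
  exists (n : nat) (t : nat -> R) (g : nat -> R -> R),
    t 0%nat = 0 /\ t n = 1 /\
    (forall i, (i < n)%nat -> t i < t (S i)) /\
    (forall i, (i < n)%nat ->
       piece (t i) (t (S i)) (g i) /\
       forall e, t i <= e <= t (S i) -> f e = g i e).

Definition analytic_piece (a b : R) (g : R -> R) : Prop :=
  exists eta, 0 < eta /\ analytic_on (a - eta) (b + eta) g.

Definition affine_piece (a b : R) (g : R -> R) : Prop := is_affine g.

Definition polynomial_piece (a b : R) (g : R -> R) : Prop := is_polynomial g.

From Stdlib Require Import Reals List Lra Lia Permutation.
From Stdlib Require Import Classical ClassicalEpsilon FunctionalExtensionality.
From Coquelicot Require Import Coquelicot.
Import ListNotations.
Open Scope R_scope.

(** On the finite set [S] carrying [mu_x^eps] and [mu_y^eps], Kantorovich duality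
    writes [W1 (mu_x^eps) (mu_y^eps)] as the maximum of
    [sum_u h u * (mu_x^eps u - mu_y^eps u)] over 1-Lipschitz [h], and the maximum
    may be taken over a finite family independent of [eps]: a maximiser can be
    shifted, one point at a time, until its values are signed sums of distances.
    Hence [ORic_eps(x,y)] is the minimum of finitely many functions of [eps],
    each in the regularity class of the walk.  A finite minimum of analytic
    functions is locally Lipschitz, and since two analytic functions compare the
    same way on a one-sided neighbourhood of any point, the minimum agrees with a
    single one of them on each side of every point; a supremum argument on
    [[0,1]] then yields finitely many pieces.

    Strong duality follows from Hahn-Banach applied to the sublinear
    min-cost-flow functional.  A flow is turned into a coupling of no larger cost
    by sending the mass routed through a vertex directly to its destination,
    which the triangle inequality allows. *)

Definition asbool (P : Prop) : bool :=
  if excluded_middle_informative P then true else false.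

Lemma asbool_true (P : Prop) : asbool P = true <-> P.
Proof.
  unfold asbool; destruct (excluded_middle_informative P); split; auto; discriminate.
Qed.

Lemma list_argmin {A} (l : list A) (h : A -> R) :
  l <> [] -> exists a, In a l /\ forall b, In b l -> h a <= h b.
Proof.
  induction l as [|a l IH]; intros Hl; [congruence|].
  destruct l as [|c l].
  - exists a; split; [left; auto|]. intros b [<-|[]]; lra.
  - destruct IH as [m [Hm Hmin]]; [discriminate|].
    destruct (Rle_dec (h a) (h m)).
    + exists a; split; [left; auto|].
      intros b [<-|Hb]; [lra|]. specialize (Hmin b Hb); lra.
    + exists m; split; [right; auto|]. intros b [<-|Hb]; [lra|auto].
Qed.

Lemma exists_notin_of_length_lt {A} (T L : list A) :
  NoDup L -> (length T < length L)%nat -> exists u, In u L /\ ~ In u T.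
Proof.
  intros HL Hlen. apply NNPP; intros Hno.
  assert (HLT : incl L T).
  { intros u Hu. apply NNPP; intros HuT. apply Hno; eauto. }
  pose proof (NoDup_incl_length HL HLT). lia.
Qed.

Lemma real_Glb_Rbar_bounds (E : R -> Prop) c b :
  E c -> (forall x, E x -> b <= x) -> b <= real (Glb_Rbar E) <= c.
Proof.
  intros Ec Hb. destruct (Glb_Rbar_correct E) as [Hlb Hglb].
  assert (Hle : Rbar_le (Glb_Rbar E) c) by (apply Hlb; auto).
  assert (Hge : Rbar_le b (Glb_Rbar E)) by (apply Hglb; intros x Ex; apply Hb; auto).
  destruct (Glb_Rbar E); simpl in *; tauto.
Qed.

Section FiniteSums.
Context {V : Type}.
Implicit Types (L : list V) (f g : V -> R).

Lemma fsum_cons a L f : fsum (a :: L) f = f a + fsum L f.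
Proof. reflexivity. Qed.

Lemma fsum_ext L f g : (forall x, In x L -> f x = g x) -> fsum L f = fsum L g.
Proof.
  induction L as [|a L IH]; intros H; [reflexivity|].
  rewrite !fsum_cons, H, IH; [reflexivity| |left; reflexivity].
  intros; apply H; right; auto.
Qed.

Lemma fsum_le L f g : (forall x, In x L -> f x <= g x) -> fsum L f <= fsum L g.
Proof.
  induction L as [|a L IH]; intros H; [simpl; lra|]. rewrite !fsum_cons.
  apply Rplus_le_compat; [apply H; left; auto | apply IH; intros; apply H; right; auto].
Qed.

Lemma fsum_add L f g : fsum L (fun x => f x + g x) = fsum L f + fsum L g.
Proof. induction L; simpl; [lra|]. rewrite IHL; ring. Qed.

Lemma fsum_sub L f g : fsum L (fun x => f x - g x) = fsum L f - fsum L g.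
Proof. induction L; simpl; [lra|]. rewrite IHL; ring. Qed.

Lemma fsum_scal_l L c f : fsum L (fun x => c * f x) = c * fsum L f.
Proof. induction L; simpl; [lra|]. rewrite IHL; ring. Qed.

Lemma fsum_scal_r L c f : fsum L (fun x => f x * c) = fsum L f * c.
Proof. induction L; simpl; [lra|]. rewrite IHL; ring. Qed.

Lemma fsum_eq0 L f : (forall x, In x L -> f x = 0) -> fsum L f = 0.
Proof.
  intros H. rewrite (fsum_ext L f (fun _ => 0)) by auto.
  induction L; [reflexivity|]. rewrite fsum_cons, IHL; [lra|]. intros; apply H; right; auto.
Qed.

Lemma fsum_ge0 L f : (forall x, In x L -> 0 <= f x) -> 0 <= fsum L f.
Proof. intros H. rewrite <- (fsum_eq0 L (fun _ => 0)) by auto. apply fsum_le; auto. Qed.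

Lemma fsum_ge_term L f a :
  (forall x, In x L -> 0 <= f x) -> In a L -> f a <= fsum L f.
Proof.
  induction L as [|b L IH]; intros H Ha; [destruct Ha|]. rewrite fsum_cons.
  assert (0 <= f b) by (apply H; left; auto).
  destruct Ha as [<-|Ha].
  - assert (0 <= fsum L f) by (apply fsum_ge0; intros; apply H; right; auto). lra.
  - assert (f a <= fsum L f) by (apply IH; auto; intros; apply H; right; auto). lra.
Qed.

Lemma fsum_eq_term L f a : NoDup L -> In a L ->
  (forall x, In x L -> x <> a -> f x = 0) -> fsum L f = f a.
Proof.
  induction L as [|b L IH]; intros HL Ha H; [destruct Ha|].
  inversion HL as [|? ? HbL HL']; subst. rewrite fsum_cons.
  destruct Ha as [<-|Ha].
  - rewrite fsum_eq0; [lra|]. intros x Hx. apply H; [right; auto|]. intros ->; auto.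
  - rewrite (H b), IH; auto; [lra| |left; auto|intros ->; auto].
    intros; apply H; auto; right; auto.
Qed.

Lemma fsum_Permutation L1 L2 f : Permutation L1 L2 -> fsum L1 f = fsum L2 f.
Proof. induction 1; simpl; try lra; congruence. Qed.

Lemma fsum_filter L (keep : V -> bool) f :
  (forall x, In x L -> keep x = false -> f x = 0) -> fsum L f = fsum (filter keep L) f.
Proof.
  induction L as [|a L IH]; intros H; [reflexivity|]. simpl.
  destruct (keep a) eqn:Ka; simpl; rewrite IH; auto;
    try (intros; apply H; auto; right; auto).
  rewrite H; [lra|left; auto|auto].
Qed.

Lemma fsum_support L1 L2 f : NoDup L1 -> NoDup L2 ->
  (forall x, f x <> 0 -> In x L1 /\ In x L2) -> fsum L1 f = fsum L2 f.
Proof.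
  intros N1 N2 H.
  assert (Hvanish : forall x, ~ In x L1 \/ ~ In x L2 -> f x = 0).
  { intros x Hx. apply NNPP; intros Hf. apply H in Hf. tauto. }
  rewrite (fsum_filter L1 (fun x => asbool (In x L2))),
          (fsum_filter L2 (fun x => asbool (In x L1))).
  - apply fsum_Permutation, NoDup_Permutation; try apply NoDup_filter; auto.
    intros x; rewrite !filter_In, !asbool_true; tauto.
  - intros x _ Hf; apply Hvanish; left; intros Hx; apply asbool_true in Hx; congruence.
  - intros x _ Hf; apply Hvanish; right; intros Hx; apply asbool_true in Hx; congruence.
Qed.

End FiniteSums.

Lemma fsum_comm {U V} (L1 : list U) (L2 : list V) (F : U -> V -> R) :
  fsum L1 (fun u => fsum L2 (F u)) = fsum L2 (fun v => fsum L1 (fun u => F u v)).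
Proof.
  induction L1 as [|a L1 IH]; simpl.
  - symmetry; apply fsum_eq0; auto.
  - rewrite IH, <- fsum_add. reflexivity.
Qed.

Definition dirac {V} (a v : V) : R :=
  if excluded_middle_informative (v = a) then 1 else 0.

Section Dirac.
Context {V : Type}.
Implicit Types (a x : V) (L : list V) (f : V -> R).

Lemma dirac_cases a x : (x = a /\ dirac a x = 1) \/ (x <> a /\ dirac a x = 0).
Proof. unfold dirac; destruct excluded_middle_informative; auto. Qed.

Lemma dirac_eq a : dirac a a = 1.
Proof. destruct (dirac_cases a a) as [[_ ->]|[]]; tauto. Qed.

Lemma dirac_neq a x : x <> a -> dirac a x = 0.
Proof. destruct (dirac_cases a x) as [[]|[_ ->]]; tauto. Qed.

Lemma dirac_sym a x : dirac a x = dirac x a.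
Proof.
  destruct (dirac_cases a x) as [[-> ->]|[H ->]]; [reflexivity|].
  rewrite dirac_neq; auto.
Qed.

Lemma fsum_dirac_l L a f : NoDup L -> In a L -> fsum L (fun x => dirac a x * f x) = f a.
Proof.
  intros. rewrite (fsum_eq_term _ _ a), dirac_eq; auto; [ring|].
  intros; rewrite dirac_neq; auto; ring.
Qed.

Lemma fsum_dirac_r L a f : NoDup L -> In a L -> fsum L (fun x => f x * dirac a x) = f a.
Proof.
  intros. rewrite <- (fsum_dirac_l L a f) by auto. apply fsum_ext; intros; ring.
Qed.

Lemma fsum_dirac L a : NoDup L -> In a L -> fsum L (dirac a) = 1.
Proof.
  intros. rewrite <- (fsum_dirac_l L a (fun _ => 1)) by auto. apply fsum_ext; intros; ring.
Qed.

End Dirac.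

(** * Flows, transport plans and couplings *)

Section Transport.
Context {V : Type} (d : V -> V -> R) (supp : list V).
Hypothesis Hd : is_distance d.
Hypothesis Hnodup : NoDup supp.

Lemma dist_ge0 u v : 0 <= d u v.
Proof. apply Hd. Qed.

Lemma dist_refl u : d u u = 0.
Proof. apply Hd; reflexivity. Qed.

Lemma dist_sym u v : d u v = d v u.
Proof. apply Hd. Qed.

Lemma dist_triangle u v w : d u w <= d u v + d v w.
Proof. apply Hd. Qed.

Definition one_lipschitz (h : V -> R) : Prop :=
  forall u v, In u supp -> In v supp -> h u - h v <= d u v.

Definition pairing (h w : V -> R) : R := fsum supp (fun u => h u * w u).

Definition balanced (w : V -> R) : Prop := fsum supp w = 0.

Definition outflow (F : V -> V -> R) (u : V) : R := fsum supp (F u).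

Definition inflow (F : V -> V -> R) (v : V) : R := fsum supp (fun u => F u v).

Definition cost (F : V -> V -> R) : R :=
  fsum supp (fun u => fsum supp (fun v => F u v * d u v)).

Definition is_flow (w : V -> R) (F : V -> V -> R) : Prop :=
  (forall u v, 0 <= F u v) /\ forall u, In u supp -> outflow F u - inflow F u = w u.

Definition min_flow_cost (w : V -> R) : R :=
  real (Glb_Rbar (fun c => exists F, is_flow w F /\ c = cost F)).

Lemma cost_ge0 F : (forall u v, 0 <= F u v) -> 0 <= cost F.
Proof.
  intros HF. apply fsum_ge0; intros; apply fsum_ge0; intros.
  apply Rmult_le_pos; [apply HF | apply dist_ge0].
Qed.

Lemma cost_le F G : (forall u v, F u v <= G u v) -> cost F <= cost G.
Proof.
  intros H. apply fsum_le; intros; apply fsum_le; intros.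
  apply Rmult_le_compat_r; [apply dist_ge0 | apply H].
Qed.

Lemma cost_add F G : cost (fun u v => F u v + G u v) = cost F + cost G.
Proof.
  unfold cost. rewrite <- fsum_add. apply fsum_ext; intros.
  rewrite <- fsum_add. apply fsum_ext; intros; ring.
Qed.

Lemma cost_scal t F : cost (fun u v => t * F u v) = t * cost F.
Proof.
  unfold cost. rewrite <- fsum_scal_l. apply fsum_ext; intros.
  rewrite <- fsum_scal_l. apply fsum_ext; intros; ring.
Qed.

Lemma is_flow_add w1 w2 F1 F2 : is_flow w1 F1 -> is_flow w2 F2 ->
  is_flow (fun u => w1 u + w2 u) (fun u v => F1 u v + F2 u v).
Proof.
  intros [P1 B1] [P2 B2]. split.
  - intros u v; specialize (P1 u v); specialize (P2 u v); lra.
  - intros u Hu. unfold outflow, inflow in *. rewrite !fsum_add, <- B1, <- B2 by auto. ring.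
Qed.

Lemma is_flow_scal t w F : 0 <= t -> is_flow w F ->
  is_flow (fun u => t * w u) (fun u v => t * F u v).
Proof.
  intros Ht [P B]. split.
  - intros; apply Rmult_le_pos; auto.
  - intros u Hu; unfold outflow, inflow in *. rewrite !fsum_scal_l, <- B by auto. ring.
Qed.

(** Route all excess mass to the hub and all deficit mass from it. *)
Lemma flow_exists hub w : In hub supp -> balanced w -> exists F, is_flow w F.
Proof.
  intros Hhub Hw.
  set (pos u := Rmax (w u) 0). set (neg u := Rmax (- w u) 0).
  assert (Hpn : forall u, pos u - neg u = w u)
    by (intros; unfold pos, neg, Rmax; repeat destruct Rle_dec; lra).
  assert (Hmass : fsum supp pos = fsum supp neg).
  { unfold balanced in Hw. rewrite <- (fsum_ext _ (fun u => pos u - neg u)) in Hw by auto.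
    rewrite fsum_sub in Hw. lra. }
  exists (fun u v => pos u * dirac hub v + dirac hub u * neg v). split.
  - intros u v. unfold pos, neg, Rmax.
    destruct (dirac_cases hub u) as [[_ ->]|[_ ->]], (dirac_cases hub v) as [[_ ->]|[_ ->]];
      repeat destruct Rle_dec; lra.
  - intros u Hu. unfold outflow, inflow.
    rewrite !fsum_add, fsum_scal_l, fsum_scal_l, fsum_scal_r, fsum_scal_r, fsum_dirac,
      Hmass, <- Hpn by auto.
    ring.
Qed.

Lemma min_flow_cost_le w F : is_flow w F -> min_flow_cost w <= cost F.
Proof.
  intros HF. apply (real_Glb_Rbar_bounds _ _ 0); [eauto|].
  intros c [G [HG ->]]. apply cost_ge0, HG.
Qed.

Lemma min_flow_cost_ge hub w b : In hub supp -> balanced w ->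
  (forall F, is_flow w F -> b <= cost F) -> b <= min_flow_cost w.
Proof.
  intros Hhub Hw Hb. destruct (flow_exists hub w Hhub Hw) as [F HF].
  apply (real_Glb_Rbar_bounds _ (cost F)); [eauto|].
  intros c [G [HG ->]]; auto.
Qed.

Lemma balanced_scal t w : balanced w -> balanced (fun u => t * w u).
Proof. unfold balanced; intros Hw; rewrite fsum_scal_l, Hw; ring. Qed.

Section Hub.
Variable hub : V.
Hypothesis Hhub : In hub supp.

Lemma min_flow_cost_ge0 w : balanced w -> 0 <= min_flow_cost w.
Proof. intros Hw; apply (min_flow_cost_ge hub); auto. intros F HF; apply cost_ge0, HF. Qed.

Lemma min_flow_cost_add w1 w2 : balanced w1 -> balanced w2 ->
  min_flow_cost (fun u => w1 u + w2 u) <= min_flow_cost w1 + min_flow_cost w2.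
Proof.
  intros H1 H2. set (P12 := min_flow_cost (fun u => w1 u + w2 u)).
  assert (Hpair : forall F1 F2, is_flow w1 F1 -> is_flow w2 F2 -> P12 <= cost F1 + cost F2).
  { intros F1 F2 HF1 HF2. rewrite <- cost_add. apply min_flow_cost_le, is_flow_add; auto. }
  assert (Hw2 : forall F2, is_flow w2 F2 -> P12 - cost F2 <= min_flow_cost w1).
  { intros F2 HF2. apply (min_flow_cost_ge hub); auto.
    intros F1 HF1. specialize (Hpair F1 F2 HF1 HF2). lra. }
  assert (P12 - min_flow_cost w1 <= min_flow_cost w2).
  { apply (min_flow_cost_ge hub); auto. intros F2 HF2. specialize (Hw2 F2 HF2). lra. }
  lra.
Qed.

Lemma min_flow_cost_scal_le t w : 0 <= t -> balanced w ->
  min_flow_cost (fun u => t * w u) <= t * min_flow_cost w.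
Proof.
  intros Ht Hw.
  assert (Hflow : forall F, is_flow w F -> min_flow_cost (fun u => t * w u) <= t * cost F).
  { intros F HF. rewrite <- cost_scal. apply min_flow_cost_le, is_flow_scal; auto. }
  destruct (Req_dec t 0) as [->|Ht0].
  - destruct (flow_exists hub w Hhub Hw) as [F HF]. specialize (Hflow F HF). lra.
  - assert (min_flow_cost (fun u => t * w u) / t <= min_flow_cost w).
    { apply (min_flow_cost_ge hub); auto. intros F HF.
      apply (Rmult_le_reg_l t); [lra|]. specialize (Hflow F HF). field_simplify; lra. }
    apply (Rmult_le_compat_l t) in H; [|lra]. field_simplify in H; lra.
Qed.

Lemma min_flow_cost_scal t w : 0 <= t -> balanced w ->
  min_flow_cost (fun u => t * w u) = t * min_flow_cost w.
Proof.
  intros Ht Hw. apply Rle_antisym; [apply min_flow_cost_scal_le; auto|].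
  destruct (Req_dec t 0) as [->|Ht0].
  - rewrite Rmult_0_l. apply min_flow_cost_ge0, balanced_scal; auto.
  - assert (Hinv : min_flow_cost w <= / t * min_flow_cost (fun u => t * w u)).
    { rewrite <- min_flow_cost_scal_le by (try apply balanced_scal; auto;
        apply Rlt_le, Rinv_0_lt_compat; lra).
      right. f_equal. apply functional_extensionality; intros u. field; auto. }
    apply (Rmult_le_compat_l t) in Hinv; [|lra].
    rewrite <- Rmult_assoc, Rinv_r, Rmult_1_l in Hinv; auto.
Qed.

End Hub.

Lemma min_flow_cost_dirac u v : In u supp -> In v supp ->
  min_flow_cost (fun x => dirac u x - dirac v x) <= d u v.
Proof.
  intros Hu Hv.
  replace (d u v) with (cost (fun a b => dirac u a * dirac v b)).
  - apply min_flow_cost_le. split.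
    + intros a b. destruct (dirac_cases u a) as [[_ ->]|[_ ->]],
        (dirac_cases v b) as [[_ ->]|[_ ->]]; lra.
    + intros x Hx. unfold outflow, inflow.
      rewrite fsum_scal_l, fsum_scal_r, !fsum_dirac by auto. ring.
  - unfold cost. 
    rewrite (fsum_ext _ _ (fun a => dirac u a * fsum supp (fun b => dirac v b * d a b))).
    + rewrite fsum_dirac_l, fsum_dirac_l; auto.
    + intros; rewrite <- fsum_scal_l; apply fsum_ext; intros; ring.
Qed.

Definition is_plan (m n : V -> R) (pi : V -> V -> R) : Prop :=
  (forall u v, 0 <= pi u v) /\
  (forall u, In u supp -> outflow pi u = m u) /\
  (forall v, In v supp -> inflow pi v = n v).

Lemma is_plan_ext m n m' n' pi :
  (forall x, In x supp -> m x = m' x) -> (forall x, In x supp -> n x = n' x) ->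
  is_plan m n pi -> is_plan m' n' pi.
Proof.
  intros Hm Hn [P [Out In]]. split; [|split]; auto.
  - intros; rewrite <- Hm; auto.
  - intros; rewrite <- Hn; auto.
Qed.

(** Mass [beta] that enters [u0] and leaves it again is matched proportionally
    to the entries of [pi] and sent directly; by the triangle inequality
    through [u0] this does not increase the cost. *)
Section Shortcut.
Variables (u0 : V) (beta : R) (m n : V -> R) (pi : V -> V -> R).
Hypothesis Hu0 : In u0 supp.
Hypothesis Hbeta : 0 < beta.
Hypothesis Hm : forall x, In x supp -> 0 <= m x.
Hypothesis Hn : forall x, In x supp -> 0 <= n x.
Hypothesis Hdiag : pi u0 u0 = 0.
Hypothesis Hpi :
  is_plan (fun x => m x + beta * dirac u0 x) (fun x => n x + beta * dirac u0 x) pi.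

Definition shortcut_out (b : V) : R := beta * pi u0 b / outflow pi u0.
Definition shortcut_in (a : V) : R := beta * pi a u0 / inflow pi u0.
Definition shortcut (a b : V) : R :=
  pi a b - dirac u0 a * shortcut_out b - dirac u0 b * shortcut_in a
  + shortcut_in a * shortcut_out b / beta.

Lemma shortcut_outflow_ge : beta <= outflow pi u0.
Proof.
  destruct Hpi as [_ [Hout _]]. rewrite Hout, dirac_eq by auto. specialize (Hm u0 Hu0). lra.
Qed.

Lemma shortcut_inflow_ge : beta <= inflow pi u0.
Proof.
  destruct Hpi as [_ [_ Hin]]. rewrite Hin, dirac_eq by auto. specialize (Hn u0 Hu0). lra.
Qed.

Lemma shortcut_out_bounds b : 0 <= shortcut_out b <= pi u0 b.
Proof.
  pose proof shortcut_outflow_ge. destruct Hpi as [Hp _]. specialize (Hp u0 b).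
  unfold shortcut_out. split.
  - apply Rmult_le_pos; [nra|]. apply Rlt_le, Rinv_0_lt_compat; lra.
  - apply (Rmult_le_reg_l (outflow pi u0)); [lra|]. field_simplify; nra.
Qed.

Lemma shortcut_in_bounds a : 0 <= shortcut_in a <= pi a u0.
Proof.
  pose proof shortcut_inflow_ge. destruct Hpi as [Hp _]. specialize (Hp a u0).
  unfold shortcut_in. split.
  - apply Rmult_le_pos; [nra|]. apply Rlt_le, Rinv_0_lt_compat; lra.
  - apply (Rmult_le_reg_l (inflow pi u0)); [lra|]. field_simplify; nra.
Qed.

Lemma fsum_shortcut_out : fsum supp shortcut_out = beta.
Proof.
  pose proof shortcut_outflow_ge. unfold shortcut_out.
  rewrite (fsum_ext _ _ (fun b => beta / outflow pi u0 * pi u0 b))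
    by (intros; unfold Rdiv; ring).
  rewrite fsum_scal_l. fold (outflow pi u0). field; lra.
Qed.

Lemma fsum_shortcut_in : fsum supp shortcut_in = beta.
Proof.
  pose proof shortcut_inflow_ge. unfold shortcut_in.
  rewrite (fsum_ext _ _ (fun a => beta / inflow pi u0 * pi a u0))
    by (intros; unfold Rdiv; ring).
  rewrite fsum_scal_l. fold (inflow pi u0). field; lra.
Qed.

Lemma shortcut_is_plan : is_plan m n shortcut.
Proof.
  assert (Hout0 : shortcut_out u0 = 0) by (unfold shortcut_out; rewrite Hdiag; lra).
  assert (Hin0 : shortcut_in u0 = 0) by (unfold shortcut_in; rewrite Hdiag; lra).
  destruct Hpi as [Hp [Hout Hin]]. unfold shortcut. split; [|split].
  - intros a b.
    pose proof (shortcut_out_bounds b). pose proof (shortcut_in_bounds a).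
    assert (0 <= shortcut_in a * shortcut_out b / beta).
    { apply Rmult_le_pos; [nra|]. apply Rlt_le, Rinv_0_lt_compat; lra. }
    specialize (Hp a b).
    destruct (dirac_cases u0 a) as [[-> ->]|[_ ->]],
      (dirac_cases u0 b) as [[-> ->]|[_ ->]];
      rewrite ?Hdiag, ?Hout0, ?Hin0 in *; lra.
  - intros a Ha. unfold outflow. rewrite fsum_add, !fsum_sub. fold (outflow pi a).
    rewrite Hout, fsum_scal_l, fsum_scal_r, fsum_dirac by auto.
    rewrite (fsum_ext _ (fun b => shortcut_in a * shortcut_out b / beta)
               (fun b => shortcut_in a / beta * shortcut_out b))
      by (intros; unfold Rdiv; ring).
    rewrite fsum_scal_l, fsum_shortcut_out. field; lra.
  - intros b Hb. unfold inflow. rewrite fsum_add, !fsum_sub. fold (inflow pi b).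
    rewrite Hin, fsum_scal_r, fsum_scal_l, fsum_dirac by auto.
    rewrite (fsum_ext _ (fun a => shortcut_in a * shortcut_out b / beta)
               (fun a => shortcut_out b / beta * shortcut_in a))
      by (intros; unfold Rdiv; ring).
    rewrite fsum_scal_l, fsum_shortcut_in. field; lra.
Qed.

Lemma shortcut_cost_eq : cost shortcut = cost pi
  - fsum supp (fun b => shortcut_out b * d u0 b) - fsum supp (fun a => shortcut_in a * d a u0)
  + fsum supp (fun a => fsum supp (fun b => shortcut_in a * shortcut_out b / beta * d a b)).
Proof.
  unfold cost.
  rewrite (fsum_ext _ _ (fun a => fsum supp (fun b => pi a b * d a b)
      - dirac u0 a * fsum supp (fun b => shortcut_out b * d a b)
      - shortcut_in a * d a u0
      + fsum supp (fun b => shortcut_in a * shortcut_out b / beta * d a b))).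
  - rewrite fsum_add, !fsum_sub, fsum_dirac_l by auto. ring.
  - intros a _. unfold shortcut. rewrite <- fsum_scal_l.
    rewrite (fsum_ext _ _ (fun b => pi a b * d a b
        - dirac u0 a * (shortcut_out b * d a b) - dirac u0 b * (shortcut_in a * d a b)
        + shortcut_in a * shortcut_out b / beta * d a b)) by (intros; ring).
    rewrite fsum_add, !fsum_sub, fsum_dirac_l by auto. reflexivity.
Qed.

Lemma shortcut_cost : cost shortcut <= cost pi.
Proof.
  rewrite shortcut_cost_eq.
  set (A := fsum supp (fun b => shortcut_out b * d u0 b)).
  set (B := fsum supp (fun a => shortcut_in a * d a u0)).
  assert (HC : fsum supp (fun a => fsum supp (fun b =>
                 shortcut_in a * shortcut_out b / beta * d a b)) <= A + B).
  { apply Rle_trans with (fsum supp (fun a => fsum supp (fun b =>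
       shortcut_in a * shortcut_out b / beta * (d a u0 + d u0 b)))).
    - apply fsum_le; intros a _; apply fsum_le; intros b _.
      apply Rmult_le_compat_l; [|apply dist_triangle].
      pose proof (shortcut_out_bounds b). pose proof (shortcut_in_bounds a).
      apply Rmult_le_pos; [nra|]. apply Rlt_le, Rinv_0_lt_compat; lra.
    - right. unfold A, B.
      rewrite (fsum_ext _ _ (fun a => shortcut_in a * d a u0 / beta * fsum supp shortcut_out
                 + shortcut_in a / beta * fsum supp (fun b => shortcut_out b * d u0 b))).
      + rewrite fsum_add, !fsum_scal_r, fsum_shortcut_out.
        rewrite (fsum_ext _ (fun a => shortcut_in a / beta) (fun a => / beta * shortcut_in a))
          by (intros; unfold Rdiv; ring).
        rewrite (fsum_ext _ (fun a => shortcut_in a * d a u0 / beta)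
                   (fun a => / beta * (shortcut_in a * d a u0))) by (intros; unfold Rdiv; ring).
        rewrite !fsum_scal_l, fsum_shortcut_in. field; lra.
      + intros a _. rewrite <- !fsum_scal_l, <- fsum_add.
        apply fsum_ext; intros; unfold Rdiv; ring. }
  assert (0 <= A).
  { apply fsum_ge0; intros; apply Rmult_le_pos; [apply shortcut_out_bounds | apply dist_ge0]. }
  assert (0 <= B).
  { apply fsum_ge0; intros; apply Rmult_le_pos; [apply shortcut_in_bounds | apply dist_ge0]. }
  lra.
Qed.

End Shortcut.

Lemma plan_remove_diagonal u0 c m n pi : In u0 supp -> 0 <= c <= pi u0 u0 ->
  is_plan (fun x => m x + c * dirac u0 x) (fun x => n x + c * dirac u0 x) pi ->
  is_plan m n (fun a b => pi a b - c * (dirac u0 a * dirac u0 b)) /\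
  cost (fun a b => pi a b - c * (dirac u0 a * dirac u0 b)) <= cost pi.
Proof.
  intros Hu0 Hc [Hp [Hout Hin]].
  assert (Hle : forall a b, 0 <= pi a b - c * (dirac u0 a * dirac u0 b) <= pi a b).
  { intros a b. specialize (Hp a b).
    destruct (dirac_cases u0 a) as [[-> ->]|[_ ->]],
      (dirac_cases u0 b) as [[-> ->]|[_ ->]]; lra. }
  split; [split; [|split]|].
  - apply Hle.
  - intros a Ha. unfold outflow. rewrite fsum_sub. fold (outflow pi a). rewrite Hout by auto.
    rewrite (fsum_ext _ _ (fun b => c * dirac u0 a * dirac u0 b)) by (intros; ring).
    rewrite fsum_scal_l, fsum_dirac by auto. ring.
  - intros b Hb. unfold inflow. rewrite fsum_sub. fold (inflow pi b). rewrite Hin by auto.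
    rewrite (fsum_ext _ _ (fun a => c * dirac u0 b * dirac u0 a)) by (intros; ring).
    rewrite fsum_scal_l, fsum_dirac by auto. ring.
  - apply cost_le. apply Hle.
Qed.

Lemma plan_remove_mass u0 alpha m n pi : In u0 supp -> 0 <= alpha ->
  (forall x, In x supp -> 0 <= m x) -> (forall x, In x supp -> 0 <= n x) ->
  is_plan (fun x => m x + alpha * dirac u0 x) (fun x => n x + alpha * dirac u0 x) pi ->
  exists pi', is_plan m n pi' /\ cost pi' <= cost pi.
Proof.
  intros Hu0 Halpha Hm Hn Hpi. pose proof (proj1 Hpi u0 u0) as Hp00.
  destruct (Rle_dec alpha (pi u0 u0)) as [Hle|Hgt].
  - eexists; apply plan_remove_diagonal; eauto; lra.
  - set (beta := alpha - pi u0 u0).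
    set (pi1 a b := pi a b - pi u0 u0 * (dirac u0 a * dirac u0 b)).
    assert (Hbeta : 0 < beta) by (unfold beta; lra).
    assert (Hdiag1 : pi1 u0 u0 = 0) by (unfold pi1; rewrite dirac_eq; ring).
    destruct (plan_remove_diagonal u0 (pi u0 u0) (fun x => m x + beta * dirac u0 x)
                (fun x => n x + beta * dirac u0 x) pi) as [Hpi1 Hcost1]; auto; [lra|..].
    { revert Hpi; apply is_plan_ext; intros; unfold beta; ring. }
    exists (shortcut u0 beta pi1); split.
    + apply shortcut_is_plan; auto.
    + eapply Rle_trans; [apply (shortcut_cost u0 beta m n)|]; eauto.
Qed.

Lemma plan_remove_masses L : NoDup L -> incl L supp -> forall m n a pi,
  (forall x, In x supp -> 0 <= m x) -> (forall x, In x supp -> 0 <= n x) ->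
  (forall x, 0 <= a x) -> (forall x, In x supp -> ~ In x L -> a x = 0) ->
  is_plan (fun x => m x + a x) (fun x => n x + a x) pi ->
  exists pi', is_plan m n pi' /\ cost pi' <= cost pi.
Proof.
  induction L as [|h L IH]; intros HL Hincl m n a pi Hm Hn Ha Hvanish Hpi.
  - exists pi; split; [|lra].
    revert Hpi; apply is_plan_ext; intros x Hx; rewrite Hvanish; auto; ring.
  - inversion HL as [|? ? HhL HL']; subst.
    set (a' x := a x - a h * dirac h x).
    assert (Ha' : forall x, 0 <= a' x).
    { intros x; unfold a'. specialize (Ha x).
      destruct (dirac_cases h x) as [[-> ->]|[_ ->]]; lra. }
    destruct (plan_remove_mass h (a h) (fun x => m x + a' x) (fun x => n x + a' x) pi)
      as [pi1 [Hpi1 Hcost1]].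
    + apply Hincl; left; auto.
    + apply Ha.
    + intros x Hx; specialize (Hm x Hx); specialize (Ha' x); lra.
    + intros x Hx; specialize (Hn x Hx); specialize (Ha' x); lra.
    + revert Hpi; apply is_plan_ext; intros; unfold a'; ring.
    + destruct (IH HL' (fun x Hx => Hincl x (or_intror Hx)) m n a' pi1)
        as [pi2 [Hpi2 Hcost2]]; auto.
      * intros x Hx HxL. unfold a'.
        destruct (dirac_cases h x) as [[-> ->]|[Hxh ->]]; [ring|].
        rewrite Hvanish; auto; [ring|]. intros [->|?]; tauto.
      * exists pi2; split; auto; lra.
Qed.

(** A flow of [m - n] plus the diagonal plan of [m] is a plan from [m + outflow F]
    to [n + outflow F]; removing the common mass leaves a plan from [m] to [n]. *)
Lemma flow_to_plan m n F : (forall x, 0 <= m x) -> (forall x, 0 <= n x) ->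
  is_flow (fun x => m x - n x) F -> exists pi, is_plan m n pi /\ cost pi <= cost F.
Proof.
  intros Hm Hn [HF Hbal].
  set (pi0 a b := F a b + dirac a b * m a).
  assert (Hpi0 : is_plan (fun x => m x + outflow F x) (fun x => n x + outflow F x) pi0).
  { split; [|split].
    - intros a b; unfold pi0. specialize (HF a b); specialize (Hm a).
      destruct (dirac_cases a b) as [[_ ->]|[_ ->]]; lra.
    - intros a Ha. unfold outflow at 1, pi0.
      rewrite fsum_add, fsum_scal_r, fsum_dirac by auto. fold (outflow F a). ring.
    - intros b Hb. unfold inflow, pi0. rewrite fsum_add. fold (inflow F b).
      rewrite (fsum_eq_term _ _ b), dirac_eq by
        (auto; intros; rewrite dirac_neq; auto; ring).
      specialize (Hbal b Hb). lra. }
  destruct (plan_remove_masses supp Hnodup (incl_refl _) m n (outflow F) pi0)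
    as [pi [Hpi Hcost]]; auto.
  - intros; apply fsum_ge0; auto.
  - intros x Hx Hx'; tauto.
  - exists pi; split; auto. eapply Rle_trans; [apply Hcost|]. right.
    unfold cost, pi0. apply fsum_ext; intros a Ha.
    rewrite (fsum_ext _ _ (fun b => F a b * d a b + dirac a b * (m a * d a b)))
      by (intros; ring).
    rewrite fsum_add, fsum_dirac_l, dist_refl by auto. ring.
Qed.

Definition supported (m : V -> R) : Prop := forall x, ~ In x supp -> m x = 0.

Definition coupling_costs (m n : V -> R) (c : R) : Prop :=
  exists pi L, is_coupling m n pi L /\ c = fsum L (fun u => fsum L (fun v => pi u v * d u v)).

Lemma plan_to_coupling m n pi : supported m -> supported n -> is_plan m n pi ->
  coupling_costs m n (cost pi).
Proof.
  intros Sm Sn [Hp [Hout Hin]].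
  set (inside a b := In a supp /\ In b supp).
  exists (fun a b => if excluded_middle_informative (inside a b) then pi a b else 0), supp.
  split; [split; [|split; [|split; [|split]]]|].
  - exact Hnodup.
  - intros u v; destruct excluded_middle_informative; auto; lra.
  - intros u v Huv; destruct excluded_middle_informative; tauto.
  - intros u. destruct (classic (In u supp)) as [Hu|Hu].
    + rewrite <- Hout by auto. apply fsum_ext; intros.
      destruct excluded_middle_informative; unfold inside in *; tauto.
    + rewrite Sm by auto. apply fsum_eq0; intros.
      destruct excluded_middle_informative; unfold inside in *; tauto.
  - intros v. destruct (classic (In v supp)) as [Hv|Hv].
    + rewrite <- Hin by auto. apply fsum_ext; intros.
      destruct excluded_middle_informative; unfold inside in *; tauto.
    + rewrite Sn by auto. apply fsum_eq0; intros.
      destruct excluded_middle_informative; unfold inside in *; tauto.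
  - unfold cost. apply fsum_ext; intros; apply fsum_ext; intros.
    destruct excluded_middle_informative; unfold inside in *; tauto.
Qed.

Lemma flow_to_coupling m n F : (forall x, 0 <= m x) -> (forall x, 0 <= n x) ->
  supported m -> supported n -> is_flow (fun x => m x - n x) F ->
  exists c, coupling_costs m n c /\ c <= cost F.
Proof.
  intros Hm Hn Sm Sn HF. destruct (flow_to_plan m n F) as [pi [Hpi Hcost]]; auto.
  exists (cost pi); split; auto. apply plan_to_coupling; auto.
Qed.

Lemma coupling_support m n pi L : supported m -> supported n -> is_coupling m n pi L ->
  forall u v, pi u v <> 0 -> (In u L /\ In v L) /\ (In u supp /\ In v supp).
Proof.
  intros Sm Sn [_ [Hp [HL [Hrow Hcol]]]] u v Huv.
  assert (HuvL : In u L /\ In v L) by (apply NNPP; intros H; apply Huv, HL, H).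
  split; auto. split.
  - apply NNPP; intros Hu.
    assert (pi u v <= fsum L (fun w => pi u w))
      by (apply (fsum_ge_term L (pi u)); [intros; apply Hp | tauto]).
    rewrite Hrow, Sm in H by auto. specialize (Hp u v). lra.
  - apply NNPP; intros Hv.
    assert (pi u v <= fsum L (fun w => pi w v))
      by (apply (fsum_ge_term L (fun w => pi w v)); [intros; apply Hp | tauto]).
    rewrite Hcol, Sn in H by auto. specialize (Hp u v). lra.
Qed.

Lemma coupling_costs_ge0 m n c : coupling_costs m n c -> 0 <= c.
Proof.
  intros [pi [L [[_ [Hp _]] ->]]]. apply fsum_ge0; intros; apply fsum_ge0; intros.
  apply Rmult_le_pos; [apply Hp | apply dist_ge0].
Qed.

(** [pairing h (m - n)] is the integral of [h u - h v] against the coupling. *)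
Lemma weak_duality m n h pi L : supported m -> supported n -> one_lipschitz h ->
  is_coupling m n pi L ->
  pairing h (fun x => m x - n x) <= fsum L (fun u => fsum L (fun v => pi u v * d u v)).
Proof.
  intros Sm Sn Hh Hpi. pose proof (coupling_support m n pi L Sm Sn Hpi) as Hsupp.
  destruct Hpi as [HL [Hp [_ [Hrow Hcol]]]].
  assert (Hm : fsum supp (fun u => h u * m u) = fsum L (fun u => h u * m u)).
  { apply fsum_support; auto. intros u Hu. split; apply NNPP; intros Hn; apply Hu.
    - rewrite Sm by auto; ring.
    - rewrite <- Hrow, fsum_eq0; [ring|]. intros v Hv.
      apply NNPP; intros Huv; apply Hsupp in Huv; tauto. }
  assert (Hn : fsum supp (fun u => h u * n u) = fsum L (fun u => h u * n u)).
  { apply fsum_support; auto. intros v Hv. split; apply NNPP; intros Hn; apply Hv.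
    - rewrite Sn by auto; ring.
    - rewrite <- Hcol, fsum_eq0; [ring|]. intros u Hu.
      apply NNPP; intros Huv; apply Hsupp in Huv; tauto. }
  unfold pairing. 
  rewrite (fsum_ext _ _ (fun u => h u * m u - h u * n u)) by (intros; ring).
  rewrite fsum_sub, Hm, Hn.
  rewrite (fsum_ext L (fun u => h u * m u) (fun u => fsum L (fun v => h u * pi u v)))
    by (intros; rewrite <- Hrow, <- fsum_scal_l; reflexivity).
  rewrite (fsum_ext L (fun v => h v * n v) (fun v => fsum L (fun u => h v * pi u v)))
    by (intros; rewrite <- Hcol, <- fsum_scal_l; reflexivity).
  rewrite <- (fsum_comm L L (fun u v => h v * pi u v)), <- fsum_sub.
  apply fsum_le; intros u Hu. rewrite <- fsum_sub. apply fsum_le; intros v Hv.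
  destruct (Req_dec (pi u v) 0) as [E|E]; [rewrite E; nra|].
  destruct (Hsupp u v E) as [_ [Hus Hvs]]. specialize (Hh u v Hus Hvs).
  specialize (Hp u v). nra.
Qed.

Section Bounds.
Variables (hub : V) (m n : V -> R).
Hypothesis Hhub : In hub supp.
Hypotheses (Hm : forall x, 0 <= m x) (Hn : forall x, 0 <= n x).
Hypotheses (Sm : supported m) (Sn : supported n).
Hypothesis Hbal : balanced (fun x => m x - n x).

Lemma W1_le_min_flow_cost : W1 d m n <= min_flow_cost (fun x => m x - n x).
Proof.
  apply (min_flow_cost_ge hub); auto. intros F HF.
  destruct (flow_to_coupling m n F) as [c [Hc HcF]]; auto.
  eapply Rle_trans; [|exact HcF].
  apply (real_Glb_Rbar_bounds (coupling_costs m n) c 0); auto.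
  apply coupling_costs_ge0.
Qed.

Lemma pairing_le_W1 h : one_lipschitz h -> pairing h (fun x => m x - n x) <= W1 d m n.
Proof.
  intros Hh. destruct (flow_exists hub _ Hhub Hbal) as [F HF].
  destruct (flow_to_coupling m n F) as [c [Hc _]]; auto.
  apply (real_Glb_Rbar_bounds (coupling_costs m n) c); auto.
  intros c' [pi [L [Hpi ->]]]. apply weak_duality; auto.
Qed.

End Bounds.

End Transport.

(** * Hahn-Banach in finite dimension *)

Definition vadd {V} (x y : V -> R) : V -> R := fun v => x v + y v.
Definition vscal {V} (t : R) (x : V -> R) : V -> R := fun v => t * x v.
Definition vzero {V} : V -> R := fun _ => 0.

Ltac vext := apply functional_extensionality; intro; unfold vadd, vscal, vzero; try ring.

Section HahnBanach.
Context {V : Type} (D : (V -> R) -> Prop) (p : (V -> R) -> R).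
Hypothesis HD0 : D vzero.
Hypothesis HDadd : forall x y, D x -> D y -> D (vadd x y).
Hypothesis HDscal : forall t x, D x -> D (vscal t x).
Hypothesis Hpadd : forall x y, D x -> D y -> p (vadd x y) <= p x + p y.
Hypothesis Hpscal : forall t x, 0 <= t -> D x -> p (vscal t x) = t * p x.

Record is_subspace (U : (V -> R) -> Prop) : Prop := {
  subspace_incl : forall x, U x -> D x;
  subspace_zero : U vzero;
  subspace_add : forall x y, U x -> U y -> U (vadd x y);
  subspace_scal : forall t x, U x -> U (vscal t x) }.

Definition linear_on (U : (V -> R) -> Prop) (phi : (V -> R) -> R) : Prop :=
  forall x y a b, U x -> U y -> phi (vadd (vscal a x) (vscal b y)) = a * phi x + b * phi y.

Definition dominated_on (U : (V -> R) -> Prop) (phi : (V -> R) -> R) : Prop :=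
  forall x, U x -> phi x <= p x.

Definition span_add (U : (V -> R) -> Prop) (e : V -> R) (y : V -> R) : Prop :=
  exists u t, U u /\ y = vadd u (vscal t e).

Lemma sublinear_zero : p vzero = 0.
Proof. replace (@vzero V) with (vscal 0 (@vzero V)) by vext. rewrite Hpscal; auto; lra. Qed.

Section Linear.
Variables (U : (V -> R) -> Prop) (phi : (V -> R) -> R).
Hypothesis Hlin : linear_on U phi.

Lemma linear_on_add x y : U x -> U y -> phi (vadd x y) = phi x + phi y.
Proof.
  intros Hx Hy. replace (vadd x y) with (vadd (vscal 1 x) (vscal 1 y)) by vext.
  rewrite Hlin; auto; ring.
Qed.

Lemma linear_on_scal a x : U x -> phi (vscal a x) = a * phi x.
Proof.
  intros Hx. replace (vscal a x) with (vadd (vscal a x) (vscal 0 x)) by vext.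
  rewrite Hlin; auto; ring.
Qed.

Lemma linear_on_zero : U vzero -> phi vzero = 0.
Proof.
  intros H0. replace (@vzero V) with (vscal 0 (@vzero V)) by vext.
  rewrite linear_on_scal; auto; ring.
Qed.

End Linear.

Lemma span_add_subspace U e : is_subspace U -> D e -> is_subspace (span_add U e).
Proof.
  intros [U1 U2 U3 U4] De. split.
  - intros y [u [t [Hu ->]]]. auto.
  - exists vzero, 0; split; auto. vext.
  - intros x y [u1 [t1 [Hu1 ->]]] [u2 [t2 [Hu2 ->]]].
    exists (vadd u1 u2), (t1 + t2); split; auto. vext.
  - intros s x [u [t [Hu ->]]]. exists (vscal s u), (s * t); split; auto. vext.
Qed.

Lemma span_add_unique U e u1 u2 t1 t2 : is_subspace U -> ~ U e -> U u1 -> U u2 ->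
  vadd u1 (vscal t1 e) = vadd u2 (vscal t2 e) -> u1 = u2 /\ t1 = t2.
Proof.
  intros [_ _ U3 U4] He Hu1 Hu2 Heq.
  assert (Hpt : forall v, u1 v + t1 * e v = u2 v + t2 * e v)
    by (intros v; exact (f_equal (fun f => f v) Heq)).
  destruct (Req_dec t1 t2) as [<-|Ht].
  - split; auto. apply functional_extensionality; intros v; specialize (Hpt v); lra.
  - exfalso. apply He.
    replace e with (vscal (/ (t1 - t2)) (vadd u2 (vscal (-1) u1))); [auto|].
    apply functional_extensionality; intros v; unfold vscal, vadd.
    specialize (Hpt v). apply (Rmult_eq_reg_l (t1 - t2)); [|lra].
    field_simplify; lra.
Qed.

Lemma extend_linear U phi e c : is_subspace U -> ~ U e -> linear_on U phi ->
  exists phi', linear_on (span_add U e) phi' /\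
    forall u t, U u -> phi' (vadd u (vscal t e)) = phi u + t * c.
Proof.
  intros HU He Hlin.
  set (phi' y := match excluded_middle_informative (exists ut : (V -> R) * R,
                    U (fst ut) /\ y = vadd (fst ut) (vscal (snd ut) e)) with
                 | left H => let ut := proj1_sig (constructive_indefinite_description _ H) in
                             phi (fst ut) + snd ut * c
                 | right _ => 0 end).
  assert (Hval : forall u t, U u -> phi' (vadd u (vscal t e)) = phi u + t * c).
  { intros u t Hu. unfold phi'. destruct excluded_middle_informative as [H|H].
    - destruct (constructive_indefinite_description _ H) as [[u' t'] [Hu' Heq]]; simpl in *.
      destruct (span_add_unique U e u u' t t') as [-> ->]; auto.
    - exfalso; apply H. exists (u, t); auto. }
  exists phi'; split; auto.
  intros x y a b [u1 [t1 [Hu1 ->]]] [u2 [t2 [Hu2 ->]]].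
  replace (vadd (vscal a (vadd u1 (vscal t1 e))) (vscal b (vadd u2 (vscal t2 e))))
    with (vadd (vadd (vscal a u1) (vscal b u2)) (vscal (a * t1 + b * t2) e)) by vext.
  destruct HU as [_ _ U3 U4].
  rewrite !Hval, Hlin; auto. ring.
Qed.

(** The admissible values [c] of the extension on [e] lie between the two
    bounds below; positive homogeneity reduces [phi' (u + t e) <= p (u + t e)]
    to them after dividing by [|t|]. *)
Lemma extend_dominated U phi phi' e c : is_subspace U -> linear_on U phi ->
  dominated_on U phi -> D e ->
  (forall u, U u -> phi u - p (vadd u (vscal (-1) e)) <= c) ->
  (forall v, U v -> c <= p (vadd v e) - phi v) ->
  (forall u t, U u -> phi' (vadd u (vscal t e)) = phi u + t * c) ->
  dominated_on (span_add U e) phi'.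
Proof.
  intros HU Hlin Hdom De Hlo Hup Hval y [u [t [Hu ->]]].
  destruct HU as [U1 U2 U3 U4]. rewrite Hval by auto.
  destruct (Rtotal_order t 0) as [Ht|[->|Ht]].
  - set (u' := vscal (/ - t) u). specialize (Hlo u' (U4 _ _ Hu)).
    replace (vadd u (vscal t e)) with (vscal (- t) (vadd u' (vscal (-1) e)))
      by (unfold u'; apply functional_extensionality; intro; unfold vadd, vscal; field; lra).
    rewrite Hpscal; [|lra|apply HDadd; apply HDscal; auto].
    replace (phi u) with (- t * phi u')
      by (unfold u'; rewrite (linear_on_scal U); auto; field; lra).
    nra.
  - replace (vadd u (vscal 0 e)) with u by vext. specialize (Hdom u Hu); lra.
  - set (u' := vscal (/ t) u). specialize (Hup u' (U4 _ _ Hu)).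
    replace (vadd u (vscal t e)) with (vscal t (vadd u' e))
      by (unfold u'; apply functional_extensionality; intro; unfold vadd, vscal; field; lra).
    rewrite Hpscal; [|lra|apply HDadd; [apply HDscal|]; auto].
    replace (phi u) with (t * phi u')
      by (unfold u'; rewrite (linear_on_scal U); auto; field; lra).
    nra.
Qed.

Lemma extend_one U phi e c : is_subspace U -> linear_on U phi -> dominated_on U phi -> D e ->
  (forall u, U u -> phi u - p (vadd u (vscal (-1) e)) <= c) ->
  (forall v, U v -> c <= p (vadd v e) - phi v) ->
  exists phi', linear_on (span_add U e) phi' /\ dominated_on (span_add U e) phi' /\
    forall u t, U u -> phi' (vadd u (vscal t e)) = phi u + t * c.
Proof.
  intros HU Hlin Hdom De Hlo Hup. destruct (classic (U e)) as [Ue|Ne].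
  - destruct HU as [U1 U2 U3 U4].
    assert (Hc : c = phi e).
    { specialize (Hup (vscal (-1) e) (U4 _ _ Ue)). specialize (Hlo e Ue).
      replace (vadd (vscal (-1) e) e) with (@vzero V) in Hup by vext.
      replace (vadd e (vscal (-1) e)) with (@vzero V) in Hlo by vext.
      rewrite sublinear_zero, (linear_on_scal U) in *; auto. lra. }
    assert (Hsub : forall y, span_add U e y -> U y) by (intros y [u [t [Hu ->]]]; auto).
    exists phi. split; [|split].
    + intros x y a b Hx Hy; apply Hlin; auto.
    + intros x Hx; apply Hdom; auto.
    + intros u t Hu. rewrite (linear_on_add U), (linear_on_scal U), Hc; auto.
  - destruct (extend_linear U phi e c) as [phi' [Hlin' Hval]]; auto.
    exists phi'; split; [|split]; auto.
    apply (extend_dominated U phi phi' e c); auto.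
Qed.

Lemma extension_value_exists U phi e : is_subspace U -> linear_on U phi ->
  dominated_on U phi -> D e ->
  exists c, (forall u, U u -> phi u - p (vadd u (vscal (-1) e)) <= c) /\
            (forall v, U v -> c <= p (vadd v e) - phi v).
Proof.
  intros HU Hlin Hdom De. pose proof HU as [U1 U2 U3 U4].
  assert (Hsep : forall u v, U u -> U v ->
            phi u - p (vadd u (vscal (-1) e)) <= p (vadd v e) - phi v).
  { intros u v Hu Hv.
    assert (H1 : phi (vadd u v) <= p (vadd (vadd u (vscal (-1) e)) (vadd v e))).
    { replace (vadd (vadd u (vscal (-1) e)) (vadd v e)) with (vadd u v) by vext. auto. }
    assert (H2 : p (vadd (vadd u (vscal (-1) e)) (vadd v e))
                 <= p (vadd u (vscal (-1) e)) + p (vadd v e)) by auto.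
    rewrite (linear_on_add U phi Hlin) in H1 by auto. lra. }
  destruct (completeness (fun r => exists u, U u /\ r = phi u - p (vadd u (vscal (-1) e))))
    as [c [Hc1 Hc2]].
  - exists (p (vadd vzero e) - phi vzero). intros r [u [Hu ->]]. auto.
  - exists (phi vzero - p (vadd vzero (vscal (-1) e))), vzero; auto.
  - exists c; split.
    + intros u Hu; apply Hc1; eauto.
    + intros v Hv; apply Hc2. intros r [u [Hu ->]]; auto.
Qed.

Lemma extend_list (es : list (V -> R)) : (forall e, In e es -> D e) ->
  forall U phi, is_subspace U -> linear_on U phi -> dominated_on U phi ->
  exists U' phi', is_subspace U' /\ (forall x, U x -> U' x) /\ (forall e, In e es -> U' e) /\
    linear_on U' phi' /\ dominated_on U' phi' /\ forall x, U x -> phi' x = phi x.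
Proof.
  induction es as [|e es IH]; intros Hes U phi HU Hlin Hdom.
  - exists U, phi. split; [|split; [|split; [intros e []|]]]; auto.
  - assert (De : D e) by (apply Hes; left; auto).
    destruct (extension_value_exists U phi e) as [c [Hlo Hup]]; auto.
    destruct (extend_one U phi e c) as [phi1 [Hlin1 [Hdom1 Hval1]]]; auto.
    destruct (IH (fun e' H => Hes e' (or_intror H)) (span_add U e) phi1)
      as [U' [phi' [HU' [Hincl [Hes' [Hlin' [Hdom' Hext]]]]]]]; auto.
    { apply span_add_subspace; auto. }
    assert (HUe : forall x, U x -> span_add U e x)
      by (intros x Hx; exists x, 0; split; auto; vext).
    exists U', phi'. split; [|split; [|split; [|split; [|split]]]]; auto.
    + intros e' [<-|He']; auto. apply Hincl. exists vzero, 1; split; [apply HU|vext].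
    + intros x Hx. rewrite Hext by auto.
      replace x with (vadd x (vscal 0 e)) at 1 by vext. rewrite Hval1; auto; ring.
Qed.

Definition vsum (L : list V) (x : V -> R) : V -> R :=
  fun v => fsum L (fun u => x u * dirac u v).

Lemma linear_on_vsum U phi L x : is_subspace U -> linear_on U phi ->
  (forall u, In u L -> U (dirac u)) ->
  U (vsum L x) /\ phi (vsum L x) = fsum L (fun u => phi (dirac u) * x u).
Proof.
  intros HU Hlin. destruct HU as [U1 U2 U3 U4].
  induction L as [|a L IH]; intros HL.
  - replace (vsum [] x) with (@vzero V) by reflexivity.
    split; auto. apply (linear_on_zero U); auto.
  - replace (vsum (a :: L) x) with (vadd (vscal (x a) (dirac a)) (vsum L x))
      by (unfold vsum; vext; rewrite fsum_cons; ring).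
    destruct IH as [IH1 IH2]; [intros; apply HL; right; auto|].
    assert (Ha : U (dirac a)) by (apply HL; left; auto).
    split; auto. rewrite (linear_on_add U), (linear_on_scal U), IH2, fsum_cons; auto. ring.
Qed.

Lemma vsum_supported (L : list V) x : NoDup L -> (forall v, ~ In v L -> x v = 0) ->
  vsum L x = x.
Proof.
  intros HL Hx. apply functional_extensionality; intros v. unfold vsum.
  destruct (classic (In v L)) as [Hv|Hv].
  - rewrite (fsum_ext _ _ (fun u => x u * dirac v u)) by (intros; rewrite dirac_sym; auto).
    rewrite fsum_dirac_r; auto.
  - rewrite Hx by auto. apply fsum_eq0; intros u Hu. rewrite dirac_neq; [ring|].
    intros ->; auto.
Qed.

Lemma hahn_banach_finite (L : list V) x0 : NoDup L ->
  (forall x, D x -> forall v, ~ In v L -> x v = 0) -> (forall u, In u L -> D (dirac u)) ->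
  D x0 -> exists c : V -> R,
    (forall x, D x -> fsum L (fun u => c u * x u) <= p x) /\
    fsum L (fun u => c u * x0 u) = p x0.
Proof.
  intros HL Hsupp Hdirac Dx0.
  set (U0 y := y = @vzero V).
  assert (HU0 : is_subspace U0).
  { unfold U0; split; [intros x ->; auto | auto | intros x y -> ->; vext | intros t x ->; vext]. }
  destruct (extend_one U0 (fun _ => 0) x0 (p x0)) as [phi1 [Hlin1 [Hdom1 Hval1]]]; auto.
  - intros x y a b _ _; ring.
  - intros x ->; rewrite sublinear_zero; lra.
  - intros u ->. replace (vadd vzero (vscal (-1) x0)) with (vscal (-1) x0) by vext.
    pose proof (Hpadd x0 (vscal (-1) x0) Dx0 (HDscal (-1) x0 Dx0)) as Hsub.
    replace (vadd x0 (vscal (-1) x0)) with (@vzero V) in Hsub by vext.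
    rewrite sublinear_zero in Hsub. lra.
  - intros v ->. replace (vadd vzero x0) with x0 by vext. lra.
  - destruct (extend_list (map dirac L)) with (U := span_add U0 x0) (phi := phi1)
      as [U [phi [HU [Hincl [Hdir [Hlin [Hdom Hext]]]]]]]; auto.
    { intros e He. apply in_map_iff in He as [u [<- Hu]]. auto. }
    { apply span_add_subspace; auto. }
    assert (Hcoef : forall x, D x -> phi x = fsum L (fun u => phi (dirac u) * x u)).
    { intros x Dx. rewrite <- (vsum_supported L x) at 1 by auto.
      apply (linear_on_vsum U); auto. intros u Hu; apply Hdir, in_map; auto. }
    exists (fun u => phi (dirac u)). split.
    + intros x Dx. rewrite <- Hcoef by auto.
      apply Hdom. rewrite <- (vsum_supported L x) by auto.
      apply (linear_on_vsum U phi); auto. intros u Hu; apply Hdir, in_map; auto.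
    + rewrite <- Hcoef by auto. rewrite Hext.
      * replace x0 with (vadd vzero (vscal 1 x0)) at 1 by vext.
        rewrite Hval1; [ring | reflexivity].
      * exists vzero, 1; split; [reflexivity | vext].
Qed.

End HahnBanach.

(** * Kantorovich duality on a finite support *)

Section Duality.
Context {V : Type} (d : V -> V -> R) (supp : list V).
Hypothesis Hd : is_distance d.
Hypothesis Hnodup : NoDup supp.
Variable hub : V.
Hypothesis Hhub : In hub supp.

Definition recenter (x : V -> R) : V -> R := fun u => x u - fsum supp x * dirac hub u.

Lemma recenter_balanced x : balanced supp (recenter x).
Proof. unfold balanced, recenter. rewrite fsum_sub, fsum_scal_l, fsum_dirac; auto; ring. Qed.

Lemma recenter_id x : balanced supp x -> recenter x = x.
Proof.
  intros Hx. unfold recenter. rewrite Hx.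
  apply functional_extensionality; intros; ring.
Qed.

Definition recentered_cost (x : V -> R) : R := min_flow_cost d supp (recenter x).

Lemma recentered_cost_add x y :
  recentered_cost (vadd x y) <= recentered_cost x + recentered_cost y.
Proof.
  unfold recentered_cost.
  replace (recenter (vadd x y)) with (fun u => recenter x u + recenter y u)
    by (unfold recenter, vadd; apply functional_extensionality; intros;
        rewrite fsum_add; ring).
  apply (min_flow_cost_add d supp Hd Hnodup hub Hhub); apply recenter_balanced.
Qed.

Lemma recentered_cost_scal t x : 0 <= t -> recentered_cost (vscal t x) = t * recentered_cost x.
Proof.
  intros Ht. unfold recentered_cost.
  replace (recenter (vscal t x)) with (fun u => t * recenter x u)
    by (unfold recenter, vscal; apply functional_extensionality; intros;
        rewrite fsum_scal_l; ring).
  apply (min_flow_cost_scal d supp Hd Hnodup hub Hhub); auto; apply recenter_balanced.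
Qed.

Lemma lipschitz_of_le_recentered_cost c :
  (forall x, supported supp x -> fsum supp (fun u => c u * x u) <= recentered_cost x) ->
  one_lipschitz d supp c.
Proof.
  intros Hc u v Hu Hv. set (x y := dirac u y - dirac v y).
  assert (Hx : balanced supp x)
    by (unfold balanced, x; rewrite fsum_sub, !fsum_dirac; auto; ring).
  assert (Hsx : supported supp x)
    by (intros y Hy; unfold x; rewrite !dirac_neq; try ring; intros ->; auto).
  assert (Hpair : fsum supp (fun y => c y * x y) = c u - c v).
  { unfold x. rewrite (fsum_ext _ _ (fun y => c y * dirac u y - c y * dirac v y))
      by (intros; ring).
    rewrite fsum_sub, !fsum_dirac_r; auto. }
  specialize (Hc x Hsx). unfold recentered_cost in Hc. rewrite recenter_id, Hpair in Hc by auto.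
  eapply Rle_trans; [exact Hc|]. apply (min_flow_cost_dirac d supp Hd Hnodup); auto.
Qed.

(** Hahn-Banach below the sublinear [recentered_cost], touching it at [m - n]. *)
Theorem kantorovich_duality m n : (forall x, 0 <= m x) -> (forall x, 0 <= n x) ->
  supported supp m -> supported supp n -> balanced supp (fun x => m x - n x) ->
  exists h, one_lipschitz d supp h /\ pairing supp h (fun x => m x - n x) = W1 d m n.
Proof.
  intros Hm Hn Sm Sn Hbal. set (w := fun x => m x - n x).
  destruct (hahn_banach_finite (supported supp) recentered_cost) with (L := supp) (x0 := w)
    as [c [Hc_le Hc_eq]]; auto.
  - intros v _; reflexivity.
  - intros x y Hx Hy v Hv; unfold vadd; rewrite Hx, Hy; auto; ring.
  - intros t x Hx v Hv; unfold vscal; rewrite Hx; auto; ring.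
  - intros; apply recentered_cost_add.
  - intros; apply recentered_cost_scal; auto.
  - intros u Hu v Hv. apply dirac_neq. intros ->; auto.
  - intros v Hv. unfold w; rewrite Sm, Sn; auto; ring.
  - exists c; split; [apply lipschitz_of_le_recentered_cost; auto|]. apply Rle_antisym.
    + apply (pairing_le_W1 d supp Hd Hnodup hub); auto.
      apply lipschitz_of_le_recentered_cost; auto.
    + unfold pairing. fold w. rewrite Hc_eq. unfold recentered_cost. rewrite recenter_id by auto.
      apply (W1_le_min_flow_cost d supp Hd Hnodup hub); auto.
Qed.

(** The sums [+- d a1 b1 +- ... +- d aj bj] with [j <= k] and [ai, bi] in [supp]. *)
Fixpoint dist_sums (k : nat) : list R :=
  match k with
  | O => [0]
  | S k => dist_sums k ++
      flat_map (fun x => flat_map (fun a => flat_map (fun b => [x + d a b; x - d a b])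
                                                     supp) supp) (dist_sums k)
  end.

Lemma dist_sums_mono k x : In x (dist_sums k) -> In x (dist_sums (S k)).
Proof. intros; simpl; apply in_or_app; left; auto. Qed.

Lemma dist_sums_step k x a b s : In x (dist_sums k) -> In a supp -> In b supp ->
  s = 1 \/ s = -1 -> In (x + s * d a b) (dist_sums (S k)).
Proof.
  intros Hx Ha Hb Hs. simpl. apply in_or_app; right.
  apply in_flat_map; exists x; split; auto.
  apply in_flat_map; exists a; split; auto.
  apply in_flat_map; exists b; split; auto.
  destruct Hs as [-> | ->]; [left | right; left]; ring.
Qed.

Definition shift_outside (T : list V) (c : R) (g : V -> R) : V -> R :=
  fun x => if excluded_middle_informative (In x T) then g x else g x + c.

Lemma pairing_shift_outside T c g w :
  pairing supp (shift_outside T c g) w =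
  pairing supp g w +
  c * fsum supp (fun u => if excluded_middle_informative (In u T) then 0 else w u).
Proof.
  unfold pairing, shift_outside. rewrite <- fsum_scal_l, <- fsum_add.
  apply fsum_ext; intros; destruct excluded_middle_informative; ring.
Qed.

Lemma shift_outside_lipschitz T s t g : s = 1 \/ s = -1 -> 0 <= t ->
  one_lipschitz d supp g ->
  (forall a b, In a supp -> ~ In a T -> In b T -> t <= d a b - s * (g a - g b)) ->
  one_lipschitz d supp (shift_outside T (s * t) g).
Proof.
  intros Hs Ht Hg Hslack a b Ha Hb. unfold shift_outside.
  pose proof (Hg a b Ha Hb). pose proof (dist_sym d Hd a b).
  destruct excluded_middle_informative as [HaT|HaT],
    (excluded_middle_informative (In b T)) as [HbT|HbT]; try lra.
  - specialize (Hslack b a Hb HbT HaT). destruct Hs as [-> | ->]; lra.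
  - specialize (Hslack a b Ha HaT HbT). destruct Hs as [-> | ->]; lra.
Qed.

(** Shift [g] off [T] by the largest amount keeping it 1-Lipschitz, in the
    direction that does not decrease the pairing with [w]; the constraint that
    becomes tight fixes a new point [a] at distance [d a b] from [b] in [T]. *)
Lemma push_step T g w : NoDup T -> incl T supp -> T <> [] ->
  (length T < length supp)%nat -> one_lipschitz d supp g ->
  exists g' a b s, In a supp /\ ~ In a T /\ In b T /\ (s = 1 \/ s = -1) /\
    (forall u, In u T -> g' u = g u) /\ g' a = g b + s * d a b /\
    one_lipschitz d supp g' /\ pairing supp g w <= pairing supp g' w.
Proof.
  intros HT Hincl Hne Hlen Hg.
  set (W := fsum supp (fun u => if excluded_middle_informative (In u T) then 0 else w u)).
  set (s := if Rle_dec 0 W then 1 else -1).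
  assert (Hs : s = 1 \/ s = -1) by (unfold s; destruct Rle_dec; auto).
  assert (HsW : 0 <= s * W) by (unfold s; destruct Rle_dec; lra).
  set (pairs := list_prod (filter (fun u => negb (asbool (In u T))) supp) T).
  assert (Hpairs : forall a b, In (a, b) pairs <-> (In a supp /\ ~ In a T) /\ In b T).
  { intros a b. unfold pairs. rewrite in_prod_iff, filter_In.
    pose proof (asbool_true (In a T)) as Hb.
    destruct (asbool (In a T)); simpl; intuition congruence. }
  set (slack (ab : V * V) := d (fst ab) (snd ab) - s * (g (fst ab) - g (snd ab))).
  destruct (list_argmin pairs slack) as [[a b] [Hab Hmin]].
  { destruct (exists_notin_of_length_lt T supp) as [a [Ha HaT]]; auto.
    destruct T as [|b T']; [congruence|].
    intros E. assert (In (a, b) pairs) by (apply Hpairs; simpl; auto).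
    rewrite E in H; auto. }
  apply Hpairs in Hab as [[Ha HaT] HbT].
  set (t := slack (a, b)).
  assert (Ht : 0 <= t).
  { unfold t, slack; simpl. pose proof (Hg a b Ha (Hincl b HbT)).
    pose proof (Hg b a (Hincl b HbT) Ha). pose proof (dist_sym d Hd a b).
    destruct Hs as [-> | ->]; lra. }
  exists (shift_outside T (s * t) g), a, b, s.
  split; [|split; [|split; [|split; [|split; [|split; [|split]]]]]]; auto.
  - intros u Hu. unfold shift_outside. destruct excluded_middle_informative; tauto.
  - unfold shift_outside, t, slack; simpl.
    destruct excluded_middle_informative; [tauto|]. destruct Hs as [-> | ->]; ring.
  - apply shift_outside_lipschitz; auto.
    intros a' b' Ha' Ha'T Hb'T. apply (Hmin (a', b')), Hpairs; auto.
  - rewrite pairing_shift_outside. fold W. nra.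
Qed.

Lemma quantize_upto f w : balanced supp w -> one_lipschitz d supp f ->
  forall k, (S k <= length supp)%nat -> exists g T,
    NoDup T /\ incl T supp /\ length T = S k /\
    (forall u, In u T -> In (g u) (dist_sums k)) /\
    one_lipschitz d supp g /\ pairing supp f w <= pairing supp g w.
Proof.
  intros Hw Hf. induction k as [|k IH]; intros Hk.
  - exists (fun u => f u - f hub), [hub].
    split; [|split; [|split; [|split; [|split]]]].
    + repeat constructor; auto.
    + intros x [<-|[]]; auto.
    + reflexivity.
    + intros x [<-|[]]. left; ring.
    + intros a b Ha Hb. pose proof (Hf a b Ha Hb). lra.
    + right. unfold pairing.
      rewrite (fsum_ext _ (fun u => (f u - f hub) * w u) (fun u => f u * w u - f hub * w u))
        by (intros; ring).
      rewrite fsum_sub, fsum_scal_l, Hw. ring.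
  - destruct IH as [g [T [HT [Hincl [Hlen [Hval [Hg Hpair]]]]]]]; [lia|].
    destruct (push_step T g w) as [g' [a [b [s [Ha [HaT [HbT [Hs [Heq [Hga [Hg' Hpair']]]]]]]]]]];
      auto; [intros ->; discriminate | lia |].
    exists g', (a :: T). split; [|split; [|split; [|split; [|split]]]].
    + constructor; auto.
    + intros x [<-|Hx]; auto.
    + simpl; lia.
    + intros x [<-|Hx].
      * rewrite Hga. apply dist_sums_step; auto.
      * rewrite Heq by auto. apply dist_sums_mono; auto.
    + auto.
    + lra.
Qed.

Fixpoint functions_into (L : list V) (vals : list R) : list (V -> R) :=
  match L with
  | [] => [fun _ => 0]
  | a :: L' => flat_map (fun x => map (fun h v => if excluded_middle_informative (v = a)
                                                 then x else h v)
                                     (functions_into L' vals)) vals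
  end.

Lemma functions_into_complete L vals g : (forall u, In u L -> In (g u) vals) ->
  exists h, In h (functions_into L vals) /\ forall u, In u L -> h u = g u.
Proof.
  revert g; induction L as [|a L IH]; intros g Hg.
  - exists (fun _ => 0); split; [left; auto|]. intros u [].
  - destruct (IH g) as [h [Hh Hhg]]; [intros; apply Hg; right; auto|].
    exists (fun v => if excluded_middle_informative (v = a) then g a else h v). split.
    + simpl. apply in_flat_map. exists (g a); split; [apply Hg; left; auto|].
      apply in_map_iff. exists h; auto.
    + intros u Hu. destruct excluded_middle_informative as [->|Hne]; auto.
      apply Hhg. destruct Hu; [congruence|auto].
Qed.

Definition potentials : list (V -> R) :=
  filter (fun h => asbool (one_lipschitz d supp h))
         (functions_into supp (dist_sums (length supp))).

Lemma potentials_lipschitz h : In h potentials -> one_lipschitz d supp h.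
Proof. unfold potentials; rewrite filter_In, asbool_true; tauto. Qed.

Lemma potentials_dominate f w : balanced supp w -> one_lipschitz d supp f ->
  exists h, In h potentials /\ pairing supp f w <= pairing supp h w.
Proof.
  intros Hw Hf.
  assert (Hlen : (0 < length supp)%nat) by (destruct supp; [destruct Hhub|simpl; lia]).
  destruct (quantize_upto f w Hw Hf (pred (length supp)))
    as [g [T [HT [Hincl [HlenT [Hval [Hg Hpair]]]]]]]; [lia|].
  assert (Hall : incl supp T) by (apply NoDup_length_incl; auto; lia).
  destruct (functions_into_complete supp (dist_sums (length supp)) g) as [h [Hh Hhg]].
  { intros u Hu. replace (length supp) with (S (pred (length supp))) by lia.
    apply dist_sums_mono, Hval, Hall; auto. }
  exists h. split.
  - unfold potentials. apply filter_In. split; auto. apply asbool_true.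
    intros a b Ha Hb. rewrite !Hhg; auto.
  - unfold pairing in *. rewrite (fsum_ext _ (fun u => h u * w u) (fun u => g u * w u)); auto.
    intros; rewrite Hhg; auto.
Qed.

Theorem W1_max_potentials m n : (forall x, 0 <= m x) -> (forall x, 0 <= n x) ->
  supported supp m -> supported supp n -> fsum supp m = fsum supp n ->
  (exists h, In h potentials /\ W1 d m n = pairing supp h (fun x => m x - n x)) /\
  (forall h, In h potentials -> pairing supp h (fun x => m x - n x) <= W1 d m n).
Proof.
  intros Hm Hn Sm Sn Hmass.
  assert (Hbal : balanced supp (fun x => m x - n x))
    by (unfold balanced; rewrite fsum_sub; lra).
  split.
  - destruct (kantorovich_duality m n) as [c [Hc Hceq]]; auto.
    destruct (potentials_dominate c _ Hbal Hc) as [h [Hh Hle]].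
    exists h; split; auto. apply Rle_antisym.
    + lra.
    + apply (pairing_le_W1 d supp Hd Hnodup hub); auto. apply potentials_lipschitz; auto.
  - intros h Hh. apply (pairing_le_W1 d supp Hd Hnodup hub); auto.
    apply potentials_lipschitz; auto.
Qed.

End Duality.

(** * Analytic functions *)

Definition analytic_at (g : R -> R) (x0 : R) : Prop :=
  exists r, 0 < r /\ exists c : nat -> R,
    forall x, Rabs (x - x0) < r -> is_pseries c (x - x0) (g x).

Lemma continuity_pt_ball f x0 : continuity_pt f x0 -> forall eps, 0 < eps ->
  exists del, 0 < del /\ forall y, Rabs (y - x0) < del -> Rabs (f y - f x0) < eps.
Proof.
  intros H eps He. destruct (H eps He) as [del [Hdel Hball]]. exists del; split; auto.
  intros y Hy. destruct (Req_dec y x0) as [->|Hne].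
  - rewrite Rminus_diag, Rabs_R0; auto.
  - apply (Hball y). split; [split; auto; constructor|]. exact Hy.
Qed.

Lemma CV_radius_gt (c : nat -> R) r : (forall y, Rabs y < r -> ex_pseries c y) ->
  forall y, Rabs y < r -> Rbar_lt (Rabs y) (CV_radius c).
Proof.
  intros H y Hy. set (r' := (Rabs y + r) / 2).
  assert (Hr' : Rabs r' = r') by (apply Rabs_pos_eq; unfold r'; pose proof (Rabs_pos y); lra).
  assert (Hlim : is_lim_seq (fun n => c n * r' ^ n) 0).
  { assert (Ex : ex_pseries c r') by (apply H; rewrite Hr'; unfold r'; lra).
    apply ex_series_lim_0 in Ex. eapply is_lim_seq_ext; [|apply Ex]. intros n.
    change (scal (pow_n r' n) (c n)) with (pow_n r' n * c n).
    rewrite pow_n_pow. apply Rmult_comm. }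
  destruct (Rbar_lt_le_dec (CV_radius c) (Rabs r')) as [Hlt|Hle].
  - exfalso. apply (CV_disk_outside c r' Hlt Hlim).
  - eapply Rbar_lt_le_trans; [|apply Hle]. simpl. rewrite Hr'. unfold r'; lra.
Qed.

Section PowerSeriesAt.
Variables (g : R -> R) (z r : R) (c : nat -> R).
Hypothesis Hc : forall x, Rabs (x - z) < r -> is_pseries c (x - z) (g x).

Lemma pseries_at_radius y : Rabs y < r -> Rbar_lt (Rabs y) (CV_radius c).
Proof.
  intros Hy. apply (CV_radius_gt c r); [|exact Hy]. intros y' Hy'. exists (g (z + y')).
  pose proof (Hc (z + y')) as H. replace (z + y' - z) with y' in H by ring. exact (H Hy').
Qed.

Lemma pseries_at_value x : Rabs (x - z) < r -> g x = PSeries c (x - z).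
Proof. intros Hx. symmetry; apply is_pseries_unique; auto. Qed.

End PowerSeriesAt.

Lemma is_pseries_const (a y : R) :
  @is_pseries R_AbsRing R_NormedModule (fun k => match k with O => a | S _ => 0 end) y a.
Proof.
  unfold is_pseries, is_series. eapply filterlim_ext; [|apply filterlim_const].
  intros n; simpl. induction n.
  - rewrite sum_O. cbv beta iota. change (a = pow_n y 0 * a). rewrite pow_n_pow. simpl; ring.
  - rewrite sum_Sn, <- IHn. cbv beta iota. change (a = a + pow_n y (S n) * 0). ring.
Qed.

Lemma analytic_at_ext f g x : analytic_at f x -> (forall e, f e = g e) -> analytic_at g x.
Proof. intros [r [Hr [c Hc]]] H. exists r; split; auto; exists c; intros; rewrite <- H; auto. Qed.

Lemma analytic_at_const a x : analytic_at (fun _ => a) x.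
Proof. exists 1; split; [lra|]. eexists. intros; apply is_pseries_const. Qed.

Lemma analytic_at_add f g x : analytic_at f x -> analytic_at g x ->
  analytic_at (fun e => f e + g e) x.
Proof.
  intros [r1 [Hr1 [c1 H1]]] [r2 [Hr2 [c2 H2]]].
  exists (Rmin r1 r2); split; [apply Rmin_pos; auto|]. exists (PS_plus c1 c2). intros y Hy.
  apply (is_pseries_plus c1 c2 (y - x) (f y) (g y)).
  - apply H1; eapply Rlt_le_trans; [eassumption|apply Rmin_l].
  - apply H2; eapply Rlt_le_trans; [eassumption|apply Rmin_r].
Qed.

Lemma analytic_at_scal k f x : analytic_at f x -> analytic_at (fun e => k * f e) x.
Proof.
  intros [r [Hr [c H]]]. exists r; split; auto. exists (PS_scal k c). intros y Hy.
  apply (is_pseries_scal k c (y - x) (f y)); auto. apply Rmult_comm.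
Qed.

Lemma analytic_at_mul_id f x : analytic_at f x -> analytic_at (fun e => e * f e) x.
Proof.
  intros [r [Hr [c H]]]. exists r; split; auto.
  exists (PS_plus (PS_incr_1 c) (PS_scal x c)). intros y Hy.
  replace (y * f y) with (plus (scal (y - x) (f y)) (scal x (f y)))
    by (change ((y - x) * f y + x * f y = y * f y); ring).
  apply (is_pseries_plus (PS_incr_1 c) (PS_scal x c) (y - x)).
  - apply (is_pseries_incr_1 c (y - x)); auto.
  - apply (is_pseries_scal x c (y - x)); auto. apply Rmult_comm.
Qed.

Lemma analytic_at_poly_eval p x : analytic_at (poly_eval p) x.
Proof.
  induction p as [|a p IH].
  - apply analytic_at_const.
  - apply (analytic_at_ext (fun e => a + e * poly_eval p e)); [|reflexivity].
    apply analytic_at_add; [apply analytic_at_const|apply analytic_at_mul_id; auto].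
Qed.

Lemma between_abs y1 y2 x rho : Rabs y1 < rho -> Rabs y2 < rho ->
  Rmin y1 y2 <= x <= Rmax y1 y2 -> Rabs x < rho.
Proof.
  intros H1 H2 H. apply Rabs_def2 in H1; apply Rabs_def2 in H2.
  apply Rabs_def1; unfold Rmin, Rmax in H; destruct Rle_dec; lra.
Qed.

Definition lipschitz_near (g : R -> R) (t rho K : R) : Prop :=
  forall s1 s2, Rabs (s1 - t) < rho -> Rabs (s2 - t) < rho ->
    Rabs (g s1 - g s2) <= K * Rabs (s1 - s2).

(** Mean value theorem, with the derivative series bounded near the centre by
    continuity. *)
Lemma analytic_at_lipschitz g t : analytic_at g t ->
  exists rho K, 0 < rho /\ 0 <= K /\ lipschitz_near g t rho K.
Proof.
  intros [r [Hr [c Hc]]].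
  pose proof (pseries_at_radius g t r c Hc) as Hcv.
  set (c' := PS_derive c).
  assert (Hc'0 : continuity_pt (PSeries c') 0).
  { apply PSeries_continuity. unfold c'. rewrite CV_radius_derive.
    apply Hcv. rewrite Rabs_R0; auto. }
  destruct (continuity_pt_ball _ _ Hc'0 1) as [del [Hdel Hbound]]; [lra|].
  exists (Rmin r del), (Rabs (PSeries c' 0) + 1).
  split; [apply Rmin_pos; auto|]. split; [pose proof (Rabs_pos (PSeries c' 0)); lra|].
  intros s1 s2 H1 H2.
  assert (Hin : forall x, Rmin (s2 - t) (s1 - t) <= x <= Rmax (s2 - t) (s1 - t) ->
                  Rabs x < Rmin r del)
    by (intros x Hx; apply (between_abs (s2 - t) (s1 - t)); auto).
  rewrite (pseries_at_value g t r c Hc s1), (pseries_at_value g t r c Hc s2)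
    by (eapply Rlt_le_trans; [eassumption|apply Rmin_l]).
  destruct (MVT_gen (PSeries c) (s2 - t) (s1 - t) (PSeries c')) as [xi [Hxi Heq]].
  - intros x Hx. apply is_derive_PSeries, Hcv.
    eapply Rlt_le_trans; [apply Hin; lra|apply Rmin_l].
  - intros x Hx. apply PSeries_continuity, Hcv.
    eapply Rlt_le_trans; [apply Hin; auto|apply Rmin_l].
  - rewrite Heq. replace (s1 - t - (s2 - t)) with (s1 - s2) by ring. rewrite Rabs_mult.
    apply Rmult_le_compat_r; [apply Rabs_pos|].
    specialize (Hbound xi). rewrite Rminus_0_r in Hbound.
    assert (Rabs (PSeries c' xi - PSeries c' 0) < 1)
      by (apply Hbound; eapply Rlt_le_trans; [apply Hin; auto|apply Rmin_r]).
    pose proof (Rabs_triang_inv (PSeries c' xi) (PSeries c' 0)). lra.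
Qed.

Lemma first_nonzero (a : nat -> R) n : a n <> 0 ->
  exists N, a N <> 0 /\ forall k, (k < N)%nat -> a k = 0.
Proof.
  induction n as [n IH] using (well_founded_induction Wf_nat.lt_wf). intros Hn.
  destruct (classic (exists k, (k < n)%nat /\ a k <> 0)) as [[k [Hk Hak]]|Hno].
  - apply (IH k); auto.
  - exists n; split; auto. intros k Hk. apply NNPP; intros Hak; eauto.
Qed.

Lemma CV_radius_decr_n a n : CV_radius (PS_decr_n a n) = CV_radius a.
Proof.
  induction n; [apply CV_radius_ext; intros; unfold PS_decr_n; auto|].
  rewrite <- IHn, <- (CV_radius_decr_1 (PS_decr_n a n)).
  apply CV_radius_ext; intros k. unfold PS_decr_n, PS_decr_1. f_equal; lia.
Qed.

Lemma mult_pos_near (u v c : R) : Rabs (u - c) < Rabs c -> Rabs (v - c) < Rabs c -> 0 < u * v.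
Proof.
  intros Hu Hv. apply Rabs_def2 in Hu; apply Rabs_def2 in Hv.
  destruct (Rle_dec 0 c).
  - rewrite Rabs_pos_eq in * by auto. nra.
  - rewrite Rabs_left in * by lra. nra.
Qed.

(** Dividing out the first nonzero coefficient [a N]: near [z] an analytic
    function is [(x - z) ^ N] times a function with the sign of [a N]. *)
Lemma analytic_at_factor D z : analytic_at D z ->
  exists rho N T, 0 < rho /\
    (forall x, Rabs (x - z) < rho -> D x = (x - z) ^ N * T x) /\
    ((forall x, Rabs (x - z) < rho -> T x = 0) \/
     (forall x y, Rabs (x - z) < rho -> Rabs (y - z) < rho -> 0 < T x * T y)).
Proof.
  intros [r [Hr [a Ha]]].
  destruct (classic (forall n, a n = 0)) as [Hzero|Hnz].
  - exists r, 0%nat, D. split; [auto|split; [intros; simpl; ring|left]].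
    intros x Hx. rewrite (pseries_at_value D z r a Ha x Hx), (PSeries_ext a (fun _ => 0)); auto.
    apply PSeries_const_0.
  - apply not_all_ex_not in Hnz as [n Hn]. destruct (first_nonzero a n Hn) as [N [HaN Hlow]].
    set (b := PS_decr_n a N).
    assert (Hb0 : PSeries b 0 = a N)
      by (unfold b; rewrite PSeries_0; unfold PS_decr_n; rewrite Nat.add_0_r; auto).
    assert (Hcont : continuity_pt (PSeries b) 0).
    { apply PSeries_continuity. unfold b. rewrite CV_radius_decr_n.
      apply (pseries_at_radius D z r a Ha). rewrite Rabs_R0; auto. }
    destruct (continuity_pt_ball _ _ Hcont (Rabs (a N))) as [del [Hdel Hnear]];
      [apply Rabs_pos_lt; auto|].
    rewrite Hb0 in Hnear.
    exists (Rmin r del), N, (fun x => PSeries b (x - z)).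
    split; [apply Rmin_pos; auto|split; [|right]].
    + intros x Hx. rewrite (pseries_at_value D z r a Ha x)
        by (eapply Rlt_le_trans; [eassumption|apply Rmin_l]).
      apply PSeries_decr_n_aux; auto.
    + intros x y Hx Hy. apply (mult_pos_near _ _ (a N)); apply Hnear;
        rewrite Rminus_0_r; eapply Rlt_le_trans; eauto; apply Rmin_r.
Qed.

Lemma analytic_one_sided_sign D z : analytic_at D z ->
  exists rho, 0 < rho /\ forall x y, Rabs (x - z) < rho -> Rabs (y - z) < rho ->
    x <> z -> 0 <= (x - z) * (y - z) -> D x <= 0 -> D y <= 0.
Proof.
  intros HD. destruct (analytic_at_factor D z HD) as [rho [N [T [Hrho [HDT [HT0|HTpos]]]]]].
  - exists rho; split; auto. intros x y Hx Hy _ _ _. rewrite HDT, HT0 by auto. lra.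
  - exists rho; split; auto. intros x y Hx Hy Hxz Hxy HDx.
    assert (Hprod : 0 <= D x * D y).
    { rewrite !HDT by auto.
      replace ((x - z) ^ N * T x * ((y - z) ^ N * T y))
        with (((x - z) * (y - z)) ^ N * (T x * T y))
        by (rewrite Rpow_mult_distr; ring).
      apply Rmult_le_pos; [apply pow_le; auto|apply Rlt_le, HTpos; auto]. }
    assert (HDx0 : D x <> 0).
    { rewrite HDT by auto. apply Rmult_integral_contrapositive; split.
      - apply pow_nonzero; lra.
      - intros E. specialize (HTpos x x Hx Hx). rewrite E in HTpos; lra. }
    nra.
Qed.

(** * Minimum of finitely many analytic functions *)

Lemma list_common_radius {A} (L : list A) (P : A -> R -> Prop) :
  (forall a r r', In a L -> 0 < r' <= r -> P a r -> P a r') ->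
  (forall a, In a L -> exists r, 0 < r /\ P a r) ->
  exists r, 0 < r /\ forall a, In a L -> P a r.
Proof.
  induction L as [|a L IH]; intros Hmono Hex.
  - exists 1; split; [lra|]; intros _ [].
  - destruct (Hex a) as [r1 [Hr1 H1]]; [left; auto|].
    destruct IH as [r2 [Hr2 H2]].
    { intros; eapply Hmono; eauto; right; auto. }
    { intros; apply Hex; right; auto. }
    exists (Rmin r1 r2); split; [apply Rmin_pos; auto|]. intros b [<-|Hb].
    + apply (Hmono _ r1); [left; auto|split; [apply Rmin_pos; auto|apply Rmin_l]|auto].
    + apply (Hmono _ r2); [right; auto|split; [apply Rmin_pos; auto|apply Rmin_r]|auto].
Qed.

Lemma lipschitz_near_mono g t rho K rho' K' : lipschitz_near g t rho K ->
  rho' <= rho -> K <= K' -> lipschitz_near g t rho' K'.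
Proof.
  intros HL Hrho HK s1 s2 H1 H2. eapply Rle_trans; [apply HL; lra|].
  apply Rmult_le_compat_r; [apply Rabs_pos | auto].
Qed.

Lemma lipschitz_near_list (Hs : list (R -> R)) t :
  (forall H, In H Hs -> exists rho K, 0 < rho /\ 0 <= K /\ lipschitz_near H t rho K) ->
  exists rho K, 0 < rho /\ 0 <= K /\ forall H, In H Hs -> lipschitz_near H t rho K.
Proof.
  induction Hs as [|H0 Hs IH]; intros Hex.
  - exists 1, 0; split; [lra|split; [lra|]]. intros _ [].
  - destruct (Hex H0) as [r1 [K1 [Hr1 [HK1 HL1]]]]; [left; auto|].
    destruct IH as [r2 [K2 [Hr2 [HK2 HL2]]]]; [intros; apply Hex; right; auto|].
    exists (Rmin r1 r2), (Rmax K1 K2).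
    split; [apply Rmin_pos; auto|split; [eapply Rle_trans; [apply HK1|apply Rmax_l]|]].
    intros H [<-|HH]; eapply lipschitz_near_mono; eauto;
      auto using Rmin_l, Rmin_r, Rmax_l, Rmax_r.
Qed.

Section MinOfAnalytic.
Variables (Hs : list (R -> R)) (f : R -> R).
Hypothesis Han : forall H x, In H Hs -> 0 <= x <= 1 -> analytic_at H x.
Hypothesis Hmin : forall e, 0 <= e <= 1 ->
  (exists H, In H Hs /\ f e = H e) /\ forall H, In H Hs -> f e <= H e.

Lemma min_locally_lipschitz : locally_lipschitz_01 f.
Proof.
  intros t Ht.
  destruct (lipschitz_near_list Hs t) as [rho [K [Hrho [HK HL]]]].
  { intros H HH. apply analytic_at_lipschitz, Han; auto; lra. }
  exists rho; split; auto. exists K; split; auto. intros s1 s2 Hs1 Hs2 H1 H2.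
  destruct (Hmin s1) as [[G1 [HG1 E1]] Hle1]; [lra|].
  destruct (Hmin s2) as [[G2 [HG2 E2]] Hle2]; [lra|].
  pose proof (Hle1 G2 HG2). pose proof (Hle2 G1 HG1).
  pose proof (HL G1 HG1 s1 s2 H1 H2) as L1. pose proof (HL G2 HG2 s1 s2 H1 H2) as L2.
  apply Rabs_le_between in L1. apply Rabs_le_between in L2.
  apply Rabs_le. lra.
Qed.

(** Two analytic functions compare the same way on a whole one-sided
    neighbourhood, so near each side of [z] the minimum is a single [H]. *)
Lemma min_one_sided z : 0 <= z <= 1 -> exists rho, 0 < rho /\
  forall x0, 0 <= x0 <= 1 -> Rabs (x0 - z) < rho -> x0 <> z ->
  exists H, In H Hs /\ forall y, 0 <= y <= 1 -> Rabs (y - z) < rho ->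
    0 <= (x0 - z) * (y - z) -> f y = H y.
Proof.
  intros Hz.
  destruct (list_common_radius (list_prod Hs Hs) (fun GH rho => forall x y,
      Rabs (x - z) < rho -> Rabs (y - z) < rho -> x <> z -> 0 <= (x - z) * (y - z) ->
      fst GH x - snd GH x <= 0 -> fst GH y - snd GH y <= 0)) as [rho [Hrho Hsign]].
  - intros GH r r' _ Hr HGH x y Hx Hy; apply HGH; lra.
  - intros [G H] HGH. apply in_prod_iff in HGH as [HG HH].
    apply (analytic_one_sided_sign (fun e => G e - H e)).
    apply (analytic_at_ext (fun e => G e + (-1) * H e)); [|intros; ring].
    apply analytic_at_add; [|apply analytic_at_scal]; apply Han; auto.
  - exists rho; split; auto. intros x0 Hx0 Hx0z Hne.
    destruct (Hmin x0 Hx0) as [[G [HG E]] Hle].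
    exists G; split; auto. intros y Hy Hyz Hside.
    assert (HGmin : forall H, In H Hs -> G y <= H y).
    { intros H HH. assert (G y - H y <= 0); [|lra].
      apply (Hsign (G, H)) with (x := x0); auto; [apply in_prod; auto|].
      simpl. rewrite <- E. specialize (Hle H HH). lra. }
    destruct (Hmin y Hy) as [[G' [HG' E']] Hle'].
    specialize (HGmin G' HG'). specialize (Hle' G HG). lra.
Qed.

Definition pieces_upto (s : R) : Prop :=
  exists n (t : nat -> R) (g : nat -> R -> R), t 0%nat = 0 /\ t n = s /\
    (forall i, (i < n)%nat -> t i < t (S i)) /\
    (forall i, (i < n)%nat -> In (g i) Hs /\ forall e, t i <= e <= t (S i) -> f e = g i e).

Lemma pieces_upto_extend s s' H : pieces_upto s -> s < s' -> In H Hs ->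
  (forall e, s <= e <= s' -> f e = H e) -> pieces_upto s'.
Proof.
  intros [n [t [g [T0 [Tn [Tinc Tg]]]]]] Hss' HH HfH.
  exists (S n), (fun i => if Nat.leb i n then t i else s'),
    (fun i => if Nat.ltb i n then g i else H).
  assert (Hleb : forall i, (i <= n)%nat -> Nat.leb i n = true) by (intros; apply Nat.leb_le; auto).
  assert (HSn : Nat.leb (S n) n = false) by (apply Nat.leb_gt; lia).
  split; [|split; [|split]].
  - simpl. auto.
  - rewrite HSn; auto.
  - intros i Hi. destruct (Nat.eq_dec i n) as [->|Hne].
    + rewrite Hleb, HSn by lia. lra.
    + rewrite !Hleb by lia. apply Tinc; lia.
  - intros i Hi. destruct (Nat.eq_dec i n) as [->|Hne].
    + rewrite Hleb, HSn, Nat.ltb_irrefl by lia. split; auto. intros e He; apply HfH; lra.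
    + rewrite !Hleb by lia. replace (Nat.ltb i n) with true by (symmetry; apply Nat.ltb_lt; lia).
      apply Tg; lia.
Qed.

(** The supremum of the [s] with [pieces_upto s] is reached and equals [1]:
    [min_one_sided] at the supremum extends a partition up to it and beyond. *)
Lemma pieces_upto_1 : pieces_upto 1.
Proof.
  set (A s := 0 <= s <= 1 /\ pieces_upto s).
  assert (A0 : A 0).
  { split; [lra|]. exists 0%nat, (fun _ => 0), (fun _ => f).
    split; [auto|split; [auto|split; intros; lia]]. }
  destruct (completeness A) as [z [Hub Hlub]].
  { exists 1. intros s [Hs1 _]; lra. }
  { exists 0; auto. }
  assert (Hz : 0 <= z <= 1) by (split; [apply Hub; auto|apply Hlub; intros s [Hs1 _]; lra]).
  destruct (min_one_sided z Hz) as [rho [Hrho Hloc]].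
  assert (Hclose : exists s, A s /\ z - rho < s).
  { apply NNPP; intros Hno. assert (z <= z - rho); [|lra].
    apply Hlub. intros s As. apply Rnot_lt_le; intros Hlt. apply Hno; eauto. }
  destruct Hclose as [s [[Hs1 Ps] Hsz]].
  assert (Hsz' : s <= z) by (apply Hub; split; auto).
  assert (Pz : pieces_upto z).
  { destruct (Req_dec s z) as [<-|Hne]; auto.
    destruct (Hloc s) as [H [HH HfH]]; [auto|apply Rabs_def1; lra|auto|].
    apply (pieces_upto_extend s z H); auto; [lra|].
    intros e He. apply HfH; [lra|apply Rabs_def1; lra|nra]. }
  destruct (Req_dec z 1) as [<-|Hz1]; auto. exfalso.
  set (z' := Rmin (z + rho / 2) 1).
  assert (Hz' : z < z' <= 1 /\ z' <= z + rho / 2) by (unfold z', Rmin; destruct Rle_dec; lra).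
  destruct (Hloc z') as [H [HH HfH]]; [lra|apply Rabs_def1; lra|lra|].
  assert (A z').
  { split; [lra|]. apply (pieces_upto_extend z z' H); auto; [lra|].
    intros e He. apply HfH; [lra|apply Rabs_def1; lra|nra]. }
  assert (z' <= z) by (apply Hub; auto). lra.
Qed.

Lemma min_piecewise (piece : R -> R -> (R -> R) -> Prop) :
  (forall H a b, In H Hs -> 0 <= a -> a < b -> b <= 1 -> piece a b H) -> piecewise piece f.
Proof.
  intros Hpiece. destruct pieces_upto_1 as [n [t [g [T0 [Tn [Tinc Tg]]]]]].
  assert (Hmono : forall i j, (i <= j <= n)%nat -> t i <= t j).
  { intros i j Hij. induction j as [|j IH].
    - replace i with 0%nat by lia. lra.
    - destruct (Nat.eq_dec i (S j)) as [->|Hne]; [lra|].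
      apply Rle_trans with (t j); [apply IH; lia|apply Rlt_le, Tinc; lia]. }
  exists n, t, g. split; [auto|split; [auto|split; [auto|]]].
  intros i Hi. destruct (Tg i Hi) as [HG HfG]. split; auto. apply Hpiece; auto.
  - rewrite <- T0. apply Hmono; lia.
  - rewrite <- Tn. apply Hmono; lia.
Qed.

End MinOfAnalytic.

(** * Regularity of the Ollivier-Ricci curvature *)

Record regularity_class (Q : (R -> R) -> Prop) (piece : R -> R -> (R -> R) -> Prop)
  : Prop := {
  regular_const : forall a, Q (fun _ => a);
  regular_add : forall f g, Q f -> Q g -> Q (fun e => f e + g e);
  regular_scal : forall k f, Q f -> Q (fun e => k * f e);
  regular_analytic : forall g x, Q g -> 0 <= x <= 1 -> analytic_at g x;
  regular_piece : forall g a b, Q g -> 0 <= a -> a < b -> b <= 1 -> piece a b g }.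

Lemma regular_fsum Q piece {V} (L : list V) (F : V -> R -> R) :
  regularity_class Q piece -> (forall u, In u L -> Q (F u)) ->
  Q (fun e => fsum L (fun u => F u e)).
Proof.
  intros HQ. induction L as [|a L IH]; intros HF.
  - apply (regular_const _ _ HQ 0).
  - apply (regular_add _ _ HQ (F a) (fun e => fsum L (fun u => F u e))).
    + apply HF; left; auto.
    + apply IH; intros; apply HF; right; auto.
Qed.

Section Curvature.
Context {V : Type} (d : V -> V -> R) (mu : V -> R -> V -> R) (K : V -> list V).
Variables (Q : (R -> R) -> Prop) (piece : R -> R -> (R -> R) -> Prop) (G : V -> V -> R -> R).
Hypothesis HQ : regularity_class Q piece.
Hypothesis Hd : is_distance d.
Hypothesis HK : forall z, NoDup (K z) /\ forall eps, 0 <= eps <= 1 ->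
  (forall v, 0 <= mu z eps v) /\ (forall v, ~ In v (K z) -> mu z eps v = 0) /\
  fsum (K z) (mu z eps) = 1.
Hypothesis HG : forall z u, Q (G z u) /\ forall eps, 0 <= eps <= 1 -> mu z eps u = G z u eps.
Variables x y : V.
Hypothesis Hxy : x <> y.

Definition joint_support : list V :=
  nodup (fun a b => excluded_middle_informative (a = b)) (K x ++ K y).

Definition candidate (h : V -> R) (e : R) : R :=
  1 - pairing joint_support h (fun u => G x u e - G y u e) / d x y.

Lemma In_joint_support u : In u joint_support <-> In u (K x) \/ In u (K y).
Proof. unfold joint_support. rewrite nodup_In, in_app_iff. tauto. Qed.

Lemma joint_support_hub : exists hub, In hub joint_support.
Proof.
  destruct (HK x) as [_ Hx]. destruct (Hx 0) as [_ [_ Hmass]]; [lra|].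
  destruct (K x) as [|a l] eqn:E; [simpl in Hmass; lra|].
  exists a. apply In_joint_support. rewrite E. left; left; auto.
Qed.

Lemma walk_on_joint_support z eps : 0 <= eps <= 1 -> z = x \/ z = y ->
  (forall v, 0 <= mu z eps v) /\ supported joint_support (mu z eps) /\
  fsum joint_support (mu z eps) = 1.
Proof.
  intros Heps Hz. destruct (HK z) as [HKz Hmu]. destruct (Hmu eps Heps) as [Hpos [Hout Hmass]].
  assert (Hsub : forall v, In v (K z) -> In v joint_support)
    by (intros v Hv; apply In_joint_support; destruct Hz; subst; auto).
  split; [auto|split].
  - intros v Hv. apply Hout. intros Hv'. apply Hv, Hsub; auto.
  - rewrite <- Hmass. apply fsum_support; auto; [apply NoDup_nodup|].
    intros v Hv. assert (In v (K z)) by (apply NNPP; intros Hv'; apply Hv, Hout; auto).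
    auto.
Qed.

Lemma candidate_regular h : Q (candidate h).
Proof.
  replace (candidate h) with (fun e => 1 + (- / d x y) *
      fsum joint_support (fun u => h u * (G x u e + (-1) * G y u e))).
  - apply (regular_add _ _ HQ); [apply (regular_const _ _ HQ)|].
    apply (regular_scal _ _ HQ), (regular_fsum _ _ _ _ HQ). intros u _.
    apply (regular_scal _ _ HQ), (regular_add _ _ HQ), (regular_scal _ _ HQ); apply HG.
  - apply functional_extensionality; intros e. unfold candidate, pairing, Rdiv.
    rewrite (fsum_ext _ (fun u => h u * (G x u e + -1 * G y u e))
               (fun u => h u * (G x u e - G y u e))) by (intros; ring).
    ring.
Qed.

Lemma ORic_min_candidates e : 0 <= e <= 1 ->
  (exists H, In H (map candidate (potentials d joint_support)) /\ ORic d mu x y e = H e) /\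
  (forall H, In H (map candidate (potentials d joint_support)) -> ORic d mu x y e <= H e).
Proof.
  intros He. destruct joint_support_hub as [hub Hhub].
  assert (Hdxy : 0 < d x y).
  { destruct (Req_dec (d x y) 0) as [E|E]; [apply Hd in E; tauto|].
    pose proof (dist_ge0 d Hd x y). lra. }
  destruct (walk_on_joint_support x e) as [Px [Sx Mx]]; auto.
  destruct (walk_on_joint_support y e) as [Py [Sy My]]; auto.
  assert (Hval : forall h, candidate h e =
            1 - pairing joint_support h (fun u => mu x e u - mu y e u) / d x y).
  { intros h. unfold candidate, pairing. do 3 f_equal.
    apply functional_extensionality; intros u. rewrite <- !(proj2 (HG _ u)); auto. }
  destruct (W1_max_potentials d joint_support Hd (NoDup_nodup _ _) hub Hhub
              (mu x e) (mu y e)) as [[h [Hh HW]] Hall]; auto; [congruence|].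
  unfold ORic. split.
  - exists (candidate h). split; [apply in_map; auto|]. rewrite Hval, HW; auto.
  - intros H HH. apply in_map_iff in HH as [h' [<- Hh']]. rewrite Hval.
    apply Rplus_le_compat_l, Ropp_le_contravar, Rmult_le_compat_r; auto.
    apply Rlt_le, Rinv_0_lt_compat; auto.
Qed.

Theorem ORic_regular : locally_lipschitz_01 (ORic d mu x y) /\ piecewise piece (ORic d mu x y).
Proof.
  assert (Han : forall H z, In H (map candidate (potentials d joint_support)) -> 0 <= z <= 1 ->
            analytic_at H z).
  { intros H z HH Hz. apply in_map_iff in HH as [h [<- _]].
    apply (regular_analytic _ _ HQ); auto. apply candidate_regular. }
  split.
  - apply (min_locally_lipschitz (map candidate (potentials d joint_support))); auto.
    apply ORic_min_candidates.
  - apply (min_piecewise (map candidate (potentials d joint_support))); auto.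
    + apply ORic_min_candidates.
    + intros H a b HH. apply in_map_iff in HH as [h [<- _]].
      apply (regular_piece _ _ HQ), candidate_regular.
Qed.

End Curvature.

Definition analytic_near_01 (g : R -> R) : Prop :=
  exists del, 0 < del /\ analytic_on (- del) (1 + del) g.

Lemma analytic_near_01_class : regularity_class analytic_near_01 analytic_piece.
Proof.
  split.
  - intros a. exists 1; split; [lra|]. intros x _; apply analytic_at_const.
  - intros f g [d1 [Hd1 Hf]] [d2 [Hd2 Hg]]. exists (Rmin d1 d2).
    split; [apply Rmin_pos; auto|]. intros x Hx.
    pose proof (Rmin_l d1 d2); pose proof (Rmin_r d1 d2).
    apply analytic_at_add; [apply Hf|apply Hg]; lra.
  - intros k f [del [Hdel Hf]]. exists del; split; auto. intros x Hx.
    apply analytic_at_scal, Hf; auto.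
  - intros g x [del [Hdel Hg]] Hx. apply Hg; lra.
  - intros g a b [del [Hdel Hg]] Ha Hab Hb. exists del; split; auto.
    intros x Hx. apply Hg; lra.
Qed.

Lemma affine_class : regularity_class is_affine affine_piece.
Proof.
  split; unfold is_affine, affine_piece.
  - intros a. exists a, 0. intros; ring.
  - intros f g [a1 [b1 H1]] [a2 [b2 H2]]. exists (a1 + a2), (b1 + b2).
    intros; rewrite H1, H2; ring.
  - intros k f [a [b H]]. exists (k * a), (k * b). intros; rewrite H; ring.
  - intros g x [a [b H]] _. apply (analytic_at_ext (poly_eval [a; b])).
    + apply analytic_at_poly_eval.
    + intros; rewrite H; simpl; ring.
  - auto.
Qed.

Fixpoint poly_add (p q : list R) : list R :=
  match p, q with
  | [], _ => q
  | _, [] => p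
  | a :: p', b :: q' => (a + b) :: poly_add p' q'
  end.

Lemma poly_eval_add p q x : poly_eval (poly_add p q) x = poly_eval p x + poly_eval q x.
Proof.
  revert q; induction p as [|a p IH]; intros [|b q]; simpl; try ring.
  rewrite IH; ring.
Qed.

Lemma poly_eval_scal k p x : poly_eval (map (Rmult k) p) x = k * poly_eval p x.
Proof. induction p as [|a p IH]; simpl; [ring|]. rewrite IH; ring. Qed.

Lemma polynomial_class : regularity_class is_polynomial polynomial_piece.
Proof.
  split; unfold is_polynomial, polynomial_piece.
  - intros a. exists [a]. intros; simpl; ring.
  - intros f g [p Hp] [q Hq]. exists (poly_add p q). intros; rewrite poly_eval_add, Hp, Hq; auto.
  - intros k f [p Hp]. exists (map (Rmult k) p). intros; rewrite poly_eval_scal, Hp; auto.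
  - intros g x [p Hp] _. apply (analytic_at_ext (poly_eval p)); [apply analytic_at_poly_eval|].
    intros; rewrite Hp; auto.
  - auto.
Qed.

Lemma choose_extensions {V} (Q : (R -> R) -> Prop) (mu : V -> R -> V -> R) :
  (forall z u, exists g, Q g /\ forall eps, 0 <= eps <= 1 -> mu z eps u = g eps) ->
  exists G : V -> V -> R -> R,
    forall z u, Q (G z u) /\ forall eps, 0 <= eps <= 1 -> mu z eps u = G z u eps.
Proof.
  intros H. destruct (choice (fun zu g => Q g /\ forall eps, 0 <= eps <= 1 ->
                                mu (fst zu) eps (snd zu) = g eps)) as [G HG].
  - intros [z u]; apply H.
  - exists (fun z u => G (z, u)). intros z u. apply (HG (z, u)).
Qed.

Theorem mainTheorem5 :
  forall (V : Type) (E : V -> V -> Prop) (d : V -> V -> R)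
         (mu : V -> R -> V -> R),
    locally_finite_graph E ->
    is_distance d -> complete_distance d ->
    local_random_walk mu ->
    (time_analytic mu -> forall x y : V, x <> y ->
       locally_lipschitz_01 (ORic d mu x y) /\
       piecewise analytic_piece (ORic d mu x y)) /\
    (time_affine mu -> forall x y : V, x <> y ->
       locally_lipschitz_01 (ORic d mu x y) /\
       piecewise affine_piece (ORic d mu x y)) /\
    (time_polynomial mu -> forall x y : V, x <> y ->
       locally_lipschitz_01 (ORic d mu x y) /\
       piecewise polynomial_piece (ORic d mu x y)).
Proof.
  intros V E d mu _ Hd _ [[K HK] _].
  split; [|split]; intros Hreg x y Hxy.
  - destruct (choose_extensions analytic_near_01 mu) as [G HG].
    { intros z u. destruct (Hreg z u) as [del [Hdel [g [Hg Hmu]]]].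
      exists g; split; [exists del|]; auto. }
    apply (ORic_regular d mu K analytic_near_01 analytic_piece G); auto.
    apply analytic_near_01_class.
  - destruct (choose_extensions is_affine mu Hreg) as [G HG].
    apply (ORic_regular d mu K is_affine affine_piece G); auto. apply affine_class.
  - destruct (choose_extensions is_polynomial mu Hreg) as [G HG].
    apply (ORic_regular d mu K is_polynomial polynomial_piece G); auto.
    apply polynomial_class.
Qed.
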